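(* If a formula $A$ is derivable in the axiom system of $\mathbb{PCL}$ or of one of its extensions $\mathbb{PS}$ ($S$ a string among N, T, W, C, U, NU, TU, WU, CU, A, NA, TA, WA, CA), then for any world label $x$ the sequent $\Rightarrow x:A$ is derivable in the corresponding calculus $\mathsf{CL}$, respectively $\mathsf{CL}^S$.
   Context: Formulas $\mathcal{L}::=p\mid\bot\mid A\wedge B\mid A\lor B\mid A\to B\mid A>B$, $\neg A:=A\to\bot$, $\top:=\neg\bot$. Axiom systems: $\mathbb{PCL}$ = classical propositional logic + (RCEA) from $A\leftrightarrow B$ infer $(A>C)\leftrightarrow(B>C)$; (RCK) from $A\to B$ infer $(C>A)\to(C>B)$; (ID) $A>A$; (R-And) $(A>B)\wedge(A>C)\to(A>(B\wedge C))$; (CM) $(A>B)\wedge(A>C)\to((A\wedge B)>C)$; (OR) $(A>C)\wedge(B>C)\to((A\lor B)>C)$. (N) $\neg(\top>\bot)$; (T) $A\to\neg(A>\bot)$; (W) $(A>B)\to(A\to B)$; (C) $(A\wedge B)\to(A>B)$; (U$_1$) $(\neg A>\bot)\to(\neg(\neg A>\bot)>\bot)$; (U$_2$) $\neg(A>\bot)\to((A>\bot)>\bot)$; (A$_1$) $(A>B)\to(C>(A>B))$; (A$_2$) $\neg(A>B)\to(C>\neg(A>B))$. $\mathbb{PN}=\mathbb{PCL}+$(N), $\mathbb{PT}=\mathbb{PN}+$(T), $\mathbb{PW}=\mathbb{PT}+$(W), $\mathbb{PC}=\mathbb{PW}+$(C); $\mathbb{PU}=\mathbb{PCL}+$(U$_1$),(U$_2$),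 $\mathbb{PNU},\dots,\mathbb{PCU}$ add (N); (N),(T); etc. to $\mathbb{PU}$; $\mathbb{PA}=\mathbb{PCL}+$(A$_1$),(A$_2$), $\mathbb{PNA},\dots,\mathbb{PCA}$ analogously. Sequent calculi: world labels $x,y,\dots$; neighbourhood labels $a,b,\dots$ incl. $\{x\}$. Relational atoms $a\in N(x)$, $x\in a$, $a\subseteq b$; labelled formulas: these, $x:A$, $a\Vdash^\exists A$, $a\Vdash^\forall A$, $x\Vdash_aA|B$. Sequents: multisets, relational atoms only on the left. Rules of $\mathsf{CL}$ (premisses / conclusion; ''(u!)'': $u$ fresh): initial $x:p,\Gamma\Rightarrow\Delta,x:p$ ($p$ atomic), $x:\bot,\Gamma\Rightarrow\Delta$; G3 rules for $\wedge,\vee,\to$; L$\forall$: $x:A,x\in a,a\Vdash^\forall A,\Gamma\Rightarrow\Delta$ / $x\in a,a\Vdash^\forall A,\Gamma\Rightarrow\Delta$; R$\forall$(x!): $x\in a,\Gamma\Rightarrow\Delta,x:A$ / $\Gamma\Rightarrow\Delta,a\Vdash^\forall A$; L$\exists$(x!): $x\in a,x:A,\Gamma\Rightarrow\Delta$ / $a\Vdash^\exists A,\Gamma\Rightarrow\Delta$; R$\exists$: $x\in a,\Gamma\Rightarrow\Delta,x:A,a\Vdash^\exists A$ / $x\in a,\Gamma\Rightarrow\Delta,a\Vdash^\exists A$; R$>$(a!): $a\in N(x),a\Vdash^\exists A,\Gamma\Rightarrow\Delta,x\Vdash_aA|B$ / $\Gamma\Rightarrow\Delta,x:A>B$; L$>$: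 $a\in N(x),x:A>B,\Gamma\Rightarrow\Delta,a\Vdash^\exists A$ and $x\Vdash_aA|B,a\in N(x),x:A>B,\Gamma\Rightarrow\Delta$ / $a\in N(x),x:A>B,\Gamma\Rightarrow\Delta$; R$|$: $c\in N(x),c\subseteq a,\Gamma\Rightarrow\Delta,x\Vdash_aA|B,c\Vdash^\exists A$ and $c\in N(x),c\subseteq a,\Gamma\Rightarrow\Delta,x\Vdash_aA|B,c\Vdash^\forall A\to B$ / $c\in N(x),c\subseteq a,\Gamma\Rightarrow\Delta,x\Vdash_aA|B$; L$|$(c!): $c\in N(x),c\subseteq a,c\Vdash^\exists A,c\Vdash^\forall A\to B,\Gamma\Rightarrow\Delta$ / $x\Vdash_aA|B,\Gamma\Rightarrow\Delta$; Ref: $a\subseteq a,\Gamma\Rightarrow\Delta$ / $\Gamma\Rightarrow\Delta$; Tr: $c\subseteq a,c\subseteq b,b\subseteq a,\Gamma\Rightarrow\Delta$ / $c\subseteq b,b\subseteq a,\Gamma\Rightarrow\Delta$; L$\subseteq$: $x\in a,a\subseteq b,x\in b,\Gamma\Rightarrow\Delta$ / $x\in a,a\subseteq b,\Gamma\Rightarrow\Delta$. Extension rules: N(a!): $a\in N(x),\Gamma\Rightarrow\Delta$ / $\Gamma\Rightarrow\Delta$; 0(y!): $y\in a,a\in N(x),\Gamma\Rightarrow\Delta$ / $a\in N(x),\Gamma\Rightarrow\Delta$; T(a!): $x\in a,a\in N(x),\Gamma\Rightarrow\Delta$ / $\Gamma\Rightarrow\Delta$; W: $x\in a,a\in N(x),\Gamma\Rightarrow\Delta$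 / $a\in N(x),\Gamma\Rightarrow\Delta$; Single: $x\in\{x\},\{x\}\in N(x),\Gamma\Rightarrow\Delta$ / $\{x\}\in N(x),\Gamma\Rightarrow\Delta$; C: $\{x\}\in N(x),\{x\}\subseteq a,a\in N(x),\Gamma\Rightarrow\Delta$ / $a\in N(x),\Gamma\Rightarrow\Delta$; Repl$_1$: $y\in\{x\},At(x),At(y),\Gamma\Rightarrow\Delta$ / $y\in\{x\},At(x),\Gamma\Rightarrow\Delta$; Repl$_2$: same premiss / $y\in\{x\},At(y),\Gamma\Rightarrow\Delta$ ($At(x)$ among $x:P$, $P$ atomic, $x\in a$, $a\in N(x)$, $x\in\{z\}$); U$_1$(c!): $z\in c,c\in N(x),a\in N(x),y\in a,b\in N(y),z\in b,\Gamma\Rightarrow\Delta$ / $a\in N(x),y\in a,b\in N(y),z\in b,\Gamma\Rightarrow\Delta$; U$_2$(c!): $z\in c,c\in N(y),a\in N(x),y\in a,b\in N(x),z\in b,\Gamma\Rightarrow\Delta$ / $a\in N(x),y\in a,b\in N(x),z\in b,\Gamma\Rightarrow\Delta$; A$_1$: $b\in N(y),a\in N(x),y\in a,b\in N(x),\Gamma\Rightarrow\Delta$ / $a\in N(x),y\in a,b\in N(x),\Gamma\Rightarrow\Delta$; A$_2$: $b\in N(x),a\in N(x),y\in a,b\in N(y),\Gamma\Rightarrow\Delta$ / $a\in N(x),y\in a,b\in N(y),\Gamma\Rightarrow\Delta$; plus contracted instances of U$_1$,U$_2$,A$_1$. Calculi: $\mathsf{CL}^N=\mathsf{CL}+$N,0;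 $\mathsf{CL}^T=\mathsf{CL}^N+$T; $\mathsf{CL}^W=\mathsf{CL}^T+$W; $\mathsf{CL}^C=\mathsf{CL}^W+$C,Single,Repl$_1$,Repl$_2$; $\mathsf{CL}^U=\mathsf{CL}+$U$_1$,U$_2$; $\mathsf{CL}^{NU},\dots,\mathsf{CL}^{CU}$ = $\mathsf{CL}^N,\dots,\mathsf{CL}^C$ + U$_1$,U$_2$; $\mathsf{CL}^A=\mathsf{CL}+$A$_1$,A$_2$; $\mathsf{CL}^{NA},\dots,\mathsf{CL}^{CA}$ = $\mathsf{CL}^N,\dots,\mathsf{CL}^C$ + A$_1$,A$_2$. *)

From Stdlib Require Import List Permutation Bool.
Import ListNotations.

Inductive form : Type :=
| Var  : nat -> form
| Bot  : form
| And  : form -> form -> form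
| Or   : form -> form -> form
| Imp  : form -> form -> form
| Cond : form -> form -> form.

Definition Neg (A : form) : form := Imp A Bot.
Definition Top : form := Neg Bot.
Definition Iff (A B : form) : form := And (Imp A B) (Imp B A).

(** Classical propositional tautologies: formulas true under every boolean
    valuation, where propositional variables and conditional formulas A>B are
    treated as atoms (i.e. substitution instances of classical tautologies). *)
Fixpoint beval (v : form -> bool) (A : form) : bool :=
  match A with
  | Var _ => v A
  | Bot => false
  | And B C => beval v B && beval v C
  | Or B C => beval v B || beval v C
  | Imp B C => implb (beval v B) (beval v C)
  | Cond _ _ => v A
  end.

Definition tautology (A : form) : Prop := forall v : form -> bool, beval v A = true.

(** * The 15 systems: a "level" (none, N, T, W, C) and a "modal extension"
    (none, U, A). E.g. (LW, MU) is PWU / CL^{WU}, (L0, M0) is PCL / CL. *)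
Inductive level : Type := L0 | LN | LT | LW | LC.
Inductive modext : Type := M0 | MU | MA.

Definition lev_rank (l : level) : nat :=
  match l with L0 => 0 | LN => 1 | LT => 2 | LW => 3 | LC => 4 end.

Definition hasN (l : level) : Prop := 1 <= lev_rank l.
Definition hasT (l : level) : Prop := 2 <= lev_rank l.
Definition hasW (l : level) : Prop := 3 <= lev_rank l.
Definition hasC (l : level) : Prop := 4 <= lev_rank l.

Inductive hilbert (l : level) (m : modext) : form -> Prop :=
| H_taut : forall A, tautology A -> hilbert l m A
| H_mp : forall A B, hilbert l m (Imp A B) -> hilbert l m A -> hilbert l m B
| H_RCEA : forall A B C, hilbert l m (Iff A B) ->
    hilbert l m (Iff (Cond A C) (Cond B C))
| H_RCK : forall A B C, hilbert l m (Imp A B) ->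
    hilbert l m (Imp (Cond C A) (Cond C B))
| H_ID : forall A, hilbert l m (Cond A A)
| H_RAnd : forall A B C,
    hilbert l m (Imp (And (Cond A B) (Cond A C)) (Cond A (And B C)))
| H_CM : forall A B C,
    hilbert l m (Imp (And (Cond A B) (Cond A C)) (Cond (And A B) C))
| H_OR : forall A B C,
    hilbert l m (Imp (And (Cond A C) (Cond B C)) (Cond (Or A B) C))
| H_N : hasN l -> hilbert l m (Neg (Cond Top Bot))
| H_T : forall A, hasT l -> hilbert l m (Imp A (Neg (Cond A Bot)))
| H_W : forall A B, hasW l -> hilbert l m (Imp (Cond A B) (Imp A B))
| H_C : forall A B, hasC l -> hilbert l m (Imp (And A B) (Cond A B))
| H_U1 : forall A, m = MU ->
    hilbert l m (Imp (Cond (Neg A) Bot) (Cond (Neg (Cond (Neg A) Bot)) Bot))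
| H_U2 : forall A, m = MU ->
    hilbert l m (Imp (Neg (Cond A Bot)) (Cond (Cond A Bot) Bot))
| H_A1 : forall A B C, m = MA ->
    hilbert l m (Imp (Cond A B) (Cond C (Cond A B)))
| H_A2 : forall A B C, m = MA ->
    hilbert l m (Imp (Neg (Cond A B)) (Cond C (Neg (Cond A B)))).

Definition wlab := nat.
Inductive nlab : Type :=
| NV : nat -> nlab                            (* neighbourhood labels a, b, ... *)
| NS : wlab -> nlab.                          (* the label {x} *)

Inductive lform : Type :=
| InN  : nlab -> wlab -> lform                (* a ∈ N(x) *)
| InW  : wlab -> nlab -> lform                (* x ∈ a *)
| Sub  : nlab -> nlab -> lform                (* a ⊆ b *)
| LF   : wlab -> form -> lform                (* x : A *)
| Ex   : nlab -> form -> lform                (* a ⊩∃ A *)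
| All  : nlab -> form -> lform                (* a ⊩∀ A *)
| Cnd  : wlab -> nlab -> form -> form -> lform. (* x ⊩_a A | B *)

Definition nlab_has_w (x : wlab) (a : nlab) : Prop :=
  match a with NV _ => False | NS y => x = y end.

Definition occ_w (x : wlab) (F : lform) : Prop :=
  match F with
  | InN a y => nlab_has_w x a \/ x = y
  | InW y a => x = y \/ nlab_has_w x a
  | Sub a b => nlab_has_w x a \/ nlab_has_w x b
  | LF y _ => x = y
  | Ex a _ => nlab_has_w x a
  | All a _ => nlab_has_w x a
  | Cnd y a _ _ => x = y \/ nlab_has_w x a
  end.

Definition occ_n (n : nat) (F : lform) : Prop :=
  match F with
  | InN a _ => a = NV n
  | InW _ a => a = NV n
  | Sub a b => a = NV n \/ b = NV n
  | LF _ _ => False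
  | Ex a _ => a = NV n
  | All a _ => a = NV n
  | Cnd _ a _ _ => a = NV n
  end.

Definition fresh_w (x : wlab) (L : list lform) : Prop :=
  forall F, In F L -> ~ occ_w x F.
Definition fresh_n (n : nat) (L : list lform) : Prop :=
  forall F, In F L -> ~ occ_n n F.

(** templates At(_) for the Repl rules: x:P (P atomic), x ∈ a, a ∈ N(x), x ∈ {z} *)
Inductive atomT : Type :=
| AProp : nat -> atomT
| AIn   : nlab -> atomT
| AN    : nlab -> atomT
| ASing : wlab -> atomT.

Definition instAt (t : atomT) (x : wlab) : lform :=
  match t with
  | AProp p => LF x (Var p)
  | AIn a => InW x a
  | AN a => InN a x
  | ASing z => InW x (NS z)
  end.

(** * Labelled sequent calculi CL, CL^N, ..., CL^{CA}.
    Sequents Γ ⇒ Δ are pairs of lists considered up to permutation (multisets),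
    via the rule [S_perm]. *)
Inductive seqder (l : level) (m : modext) : list lform -> list lform -> Prop :=
| S_perm : forall G D G' D', seqder l m G D ->
    Permutation G G' -> Permutation D D' -> seqder l m G' D'
| S_init : forall x p G D,
    seqder l m (LF x (Var p) :: G) (LF x (Var p) :: D)
| S_botL : forall x G D, seqder l m (LF x Bot :: G) D
| S_andL : forall x A B G D, seqder l m (LF x A :: LF x B :: G) D ->
    seqder l m (LF x (And A B) :: G) D
| S_andR : forall x A B G D, seqder l m G (LF x A :: D) -> seqder l m G (LF x B :: D) ->
    seqder l m G (LF x (And A B) :: D)
| S_orL : forall x A B G D, seqder l m (LF x A :: G) D -> seqder l m (LF x B :: G) D ->
    seqder l m (LF x (Or A B) :: G) D
| S_orR : forall x A B G D, seqder l m G (LF x A :: LF x B :: D) ->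
    seqder l m G (LF x (Or A B) :: D)
| S_impL : forall x A B G D, seqder l m G (LF x A :: D) -> seqder l m (LF x B :: G) D ->
    seqder l m (LF x (Imp A B) :: G) D
| S_impR : forall x A B G D, seqder l m (LF x A :: G) (LF x B :: D) ->
    seqder l m G (LF x (Imp A B) :: D)
| S_LAll : forall x a A G D,
    seqder l m (LF x A :: InW x a :: All a A :: G) D ->
    seqder l m (InW x a :: All a A :: G) D
| S_RAll : forall x a A G D,
    fresh_w x (G ++ All a A :: D) ->
    seqder l m (InW x a :: G) (LF x A :: D) ->
    seqder l m G (All a A :: D)
| S_LEx : forall x a A G D,
    fresh_w x (Ex a A :: G ++ D) ->
    seqder l m (InW x a :: LF x A :: G) D ->
    seqder l m (Ex a A :: G) D
| S_REx : forall x a A G D,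
    seqder l m (InW x a :: G) (LF x A :: Ex a A :: D) ->
    seqder l m (InW x a :: G) (Ex a A :: D)
| S_RCond : forall n x A B G D,
    fresh_n n (G ++ LF x (Cond A B) :: D) ->
    seqder l m (InN (NV n) x :: Ex (NV n) A :: G) (Cnd x (NV n) A B :: D) ->
    seqder l m G (LF x (Cond A B) :: D)
| S_LCond : forall a x A B G D,
    seqder l m (InN a x :: LF x (Cond A B) :: G) (Ex a A :: D) ->
    seqder l m (Cnd x a A B :: InN a x :: LF x (Cond A B) :: G) D ->
    seqder l m (InN a x :: LF x (Cond A B) :: G) D
| S_RBar : forall c a x A B G D,
    seqder l m (InN c x :: Sub c a :: G) (Cnd x a A B :: Ex c A :: D) ->
    seqder l m (InN c x :: Sub c a :: G) (Cnd x a A B :: All c (Imp A B) :: D) ->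
    seqder l m (InN c x :: Sub c a :: G) (Cnd x a A B :: D)
| S_LBar : forall n a x A B G D,
    fresh_n n (Cnd x a A B :: G ++ D) ->
    seqder l m (InN (NV n) x :: Sub (NV n) a :: Ex (NV n) A :: All (NV n) (Imp A B) :: G) D ->
    seqder l m (Cnd x a A B :: G) D
| S_Ref : forall a G D, seqder l m (Sub a a :: G) D -> seqder l m G D
| S_Tr : forall a b c G D,
    seqder l m (Sub c a :: Sub c b :: Sub b a :: G) D ->
    seqder l m (Sub c b :: Sub b a :: G) D
| S_LSub : forall x a b G D,
    seqder l m (InW x a :: Sub a b :: InW x b :: G) D ->
    seqder l m (InW x a :: Sub a b :: G) D
| S_N : forall n x G D, hasN l -> fresh_n n (G ++ D) ->
    seqder l m (InN (NV n) x :: G) D -> seqder l m G D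
| S_0 : forall y a x G D, hasN l -> fresh_w y (InN a x :: G ++ D) ->
    seqder l m (InW y a :: InN a x :: G) D -> seqder l m (InN a x :: G) D
| S_T : forall n x G D, hasT l -> fresh_n n (G ++ D) ->
    seqder l m (InW x (NV n) :: InN (NV n) x :: G) D -> seqder l m G D
| S_W : forall a x G D, hasW l ->
    seqder l m (InW x a :: InN a x :: G) D -> seqder l m (InN a x :: G) D
| S_Single : forall x G D, hasC l ->
    seqder l m (InW x (NS x) :: InN (NS x) x :: G) D ->
    seqder l m (InN (NS x) x :: G) D
| S_C : forall a x G D, hasC l ->
    seqder l m (InN (NS x) x :: Sub (NS x) a :: InN a x :: G) D ->
    seqder l m (InN a x :: G) D
| S_Repl1 : forall t x y G D, hasC l ->
    seqder l m (InW y (NS x) :: instAt t x :: instAt t y :: G) D ->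
    seqder l m (InW y (NS x) :: instAt t x :: G) D
| S_Repl2 : forall t x y G D, hasC l ->
    seqder l m (InW y (NS x) :: instAt t x :: instAt t y :: G) D ->
    seqder l m (InW y (NS x) :: instAt t y :: G) D
(* U1, U2, A1 together with their contracted instances: the principal atoms
   need only occur in Γ (membership), so coinciding principal atoms may be
   contracted; the premiss repeats the conclusion. *)
| S_U1 : forall n a b x y z G D, m = MU ->
    incl [InN a x; InW y a; InN b y; InW z b] G ->
    fresh_n n (G ++ D) ->
    seqder l m (InW z (NV n) :: InN (NV n) x :: G) D -> seqder l m G D
| S_U2 : forall n a b x y z G D, m = MU ->
    incl [InN a x; InW y a; InN b x; InW z b] G ->
    fresh_n n (G ++ D) ->
    seqder l m (InW z (NV n) :: InN (NV n) y :: G) D -> seqder l m G D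
| S_A1 : forall a b x y G D, m = MA ->
    incl [InN a x; InW y a; InN b x] G ->
    seqder l m (InN b y :: G) D -> seqder l m G D
| S_A2 : forall a b x y G D, m = MA ->
    seqder l m (InN b x :: InN a x :: InW y a :: InN b y :: G) D ->
    seqder l m (InN a x :: InW y a :: InN b y :: G) D.

From Stdlib Require Import List Permutation Bool Arith Lia.
Import ListNotations.

(* Every axiom has a cut-free
   derivation, RCEA and RCK follow from the invertibility of the implication
   rules, and modus ponens is a cut.  The structural theory (substitution of
   labels, weakening, invertibility, contraction, cut) is proved for a variant
   of CL^S in which the side formulas of a rule need only be members of the
   context, so that relational atoms behave as a set; this costs nothing when
   translating back, because the rules of CL^S keep the relational atoms they
   use, and the U- and A-rules come with their contracted instances.  Cut is
   admissible by induction on the weight of the cut formula: propositional cut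
   formulas are removed by inverting both premisses, and for the others the cut
   is pushed up the derivation of a premiss in which the cut formula is never
   consumed, except in initial sequents. *)

Definition form_eq_dec : forall A B : form, {A = B} + {A <> B}.
Proof. decide equality; apply Nat.eq_dec. Defined.
Definition nlab_eq_dec : forall a b : nlab, {a = b} + {a <> b}.
Proof. decide equality; apply Nat.eq_dec. Defined.
Definition lform_eq_dec : forall F G : lform, {F = G} + {F <> G}.
Proof. decide equality; try apply form_eq_dec; try apply nlab_eq_dec; apply Nat.eq_dec. Defined.

Lemma count_occ_lform_cons F L G :
  count_occ lform_eq_dec (F :: L) G = (if lform_eq_dec F G then 1 else 0) + count_occ lform_eq_dec L G.
Proof. simpl. destruct (lform_eq_dec F G); reflexivity. Qed.

Ltac perm :=
  apply (Permutation_count_occ lform_eq_dec); intro;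
  rewrite ?map_app; cbn [map app];
  repeat progress (rewrite ?count_occ_app, ?count_occ_lform_cons; cbn [count_occ]);
  repeat match goal with |- context [lform_eq_dec ?a ?b] => destruct (lform_eq_dec a b) end; lia.

Lemma Permutation_incl {A} (L L' : list A) : Permutation L L' -> incl L L'.
Proof. intros H z. apply Permutation_in, H. Qed.

Lemma Permutation_split {A} (x : A) L : In x L -> exists L', Permutation L (x :: L').
Proof.
  intros (L1 & L2 & ->) % in_split. exists (L1 ++ L2). apply Permutation_sym, Permutation_middle.
Qed.

Lemma Permutation_cons_app_split {A} (x : A) L G G0 :
  Permutation (x :: G) (L ++ G0) -> ~ In x L ->
  exists G2, Permutation G0 (x :: G2) /\ Permutation G (L ++ G2).
Proof.
  intros HP Hx.
  assert (Hx0 : In x G0).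
  { destruct (in_app_or L G0 x); [apply (Permutation_in _ HP); now left|contradiction|assumption]. }
  destruct (Permutation_split x G0 Hx0) as [G2 HG2]. exists G2. split; [exact HG2|].
  apply (Permutation_cons_app_inv _ _ (a := x)). rewrite HP, HG2. reflexivity.
Qed.

Lemma Permutation_filter {A} (f : A -> bool) L L' : Permutation L L' -> Permutation (filter f L) (filter f L').
Proof.
  induction 1; simpl; auto.
  - destruct (f x); auto.
  - destruct (f x), (f y); auto. apply perm_swap.
  - eapply Permutation_trans; eauto.
Qed.

Lemma Permutation_mem {A} (L L' : list A) z : Permutation L L' -> (In z L <-> In z L').
Proof. intro H. split; apply Permutation_in; [|symmetry]; exact H. Qed.

Ltac mem_tac := simpl; repeat rewrite in_app_iff; simpl; intuition auto.

Ltac incl_tac :=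
  let z := fresh "z" in let Hz := fresh "Hz" in
  repeat match goal with X := _ : list lform |- _ => subst X end;
  intros z Hz;
  repeat match goal with H : Permutation _ _ |- _ => apply (Permutation_mem _ _ z) in H end;
  repeat match goal with H : incl _ _ |- _ => specialize (H z) end;
  repeat progress (simpl in *; repeat rewrite in_app_iff in *); intuition (subst; auto).

(** * Labels and fresh labels *)

Definition nlab_wlabs (a : nlab) : list wlab := match a with NV _ => [] | NS y => [y] end.
Definition nlab_nvars (a : nlab) : list nat := match a with NV n => [n] | NS _ => [] end.

Definition lform_wlabs (F : lform) : list wlab :=
  match F with
  | InN a y | InW y a | Cnd y a _ _ => y :: nlab_wlabs a
  | Sub a b => nlab_wlabs a ++ nlab_wlabs b
  | LF y _ => [y]
  | Ex a _ | All a _ => nlab_wlabs a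
  end.
Definition lform_nvars (F : lform) : list nat :=
  match F with
  | InN a _ | InW _ a | Ex a _ | All a _ | Cnd _ a _ _ => nlab_nvars a
  | Sub a b => nlab_nvars a ++ nlab_nvars b
  | LF _ _ => []
  end.

Definition wlabs (L : list lform) : list wlab := flat_map lform_wlabs L.
Definition nvars (L : list lform) : list nat := flat_map lform_nvars L.

Lemma in_wlabs y L : In y (wlabs L) <-> exists F, In F L /\ In y (lform_wlabs F).
Proof. unfold wlabs; rewrite in_flat_map; firstorder. Qed.
Lemma in_nvars n L : In n (nvars L) <-> exists F, In F L /\ In n (lform_nvars F).
Proof. unfold nvars; rewrite in_flat_map; firstorder. Qed.

Lemma wlabs_incl L L' : incl L L' -> incl (wlabs L) (wlabs L').
Proof. intros H y. rewrite !in_wlabs. firstorder. Qed.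
Lemma nvars_incl L L' : incl L L' -> incl (nvars L) (nvars L').
Proof. intros H n. rewrite !in_nvars. firstorder. Qed.

Lemma wlabs_app L L' : wlabs (L ++ L') = wlabs L ++ wlabs L'.
Proof. apply flat_map_app. Qed.
Lemma nvars_app L L' : nvars (L ++ L') = nvars L ++ nvars L'.
Proof. apply flat_map_app. Qed.

Lemma fresh_wlabs y L L' : incl L L' -> ~ In y (wlabs L') -> ~ In y (wlabs L).
Proof. intros H1 H2 H3. apply H2. eapply wlabs_incl; eauto. Qed.
Lemma fresh_nvars n L L' : incl L L' -> ~ In n (nvars L') -> ~ In n (nvars L).
Proof. intros H1 H2 H3. apply H2. eapply nvars_incl; eauto. Qed.

Lemma fresh_lform_wlabs y F L : In F L -> ~ In y (wlabs L) -> ~ In y (lform_wlabs F).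
Proof. intros HF H Hy. apply H, in_wlabs. eauto. Qed.
Lemma fresh_lform_nvars n F L : In F L -> ~ In n (nvars L) -> ~ In n (lform_nvars F).
Proof. intros HF H Hn. apply H, in_nvars. eauto. Qed.

Definition new_wlab (L : list lform) : wlab := S (list_max (wlabs L)).
Definition new_nvar (L : list lform) : nat := S (list_max (nvars L)).

Lemma le_list_max k ks : In k ks -> k <= list_max ks.
Proof.
  intro H. pose proof (proj1 (list_max_le ks (list_max ks)) (le_n _)) as Hall.
  rewrite Forall_forall in Hall. auto.
Qed.

Lemma new_wlab_fresh L L' : incl L' L -> ~ In (new_wlab L) (wlabs L').
Proof. intros Hi H. apply (wlabs_incl _ _ Hi), le_list_max in H. unfold new_wlab in H. lia. Qed.
Lemma new_nvar_fresh L L' : incl L' L -> ~ In (new_nvar L) (nvars L').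
Proof. intros Hi H. apply (nvars_incl _ _ Hi), le_list_max in H. unfold new_nvar in H. lia. Qed.

(** * A calculus with set-like relational atoms *)

Fixpoint fsize (A : form) : nat :=
  match A with
  | Var _ | Bot => 1
  | And A B | Or A B | Imp A B => 1 + fsize A + fsize B
  | Cond A B => 2 + fsize A + fsize B
  end.

(* Every formula that a rule for [F] adds to a premiss is lighter than [F],
   e.g. [x : A > B] > [x ⊩_a A|B] > [c ⊩∀ A → B] > [x : A]. *)
Definition weight (F : lform) : nat :=
  match F with
  | InN _ _ | InW _ _ | Sub _ _ => 0
  | LF _ A => 4 * fsize A
  | Ex _ A | All _ A => 4 * fsize A + 1
  | Cnd _ _ A B => 4 * (fsize A + fsize B + 1) + 2
  end.

Definition logicalL (P : lform) : Prop :=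
  match P with
  | LF _ (And _ _) | LF _ (Or _ _) | LF _ (Imp _ _) | Ex _ _ | Cnd _ _ _ _ => True
  | _ => False
  end.
Definition logicalR (P : lform) : Prop :=
  match P with
  | LF _ (And _ _) | LF _ (Or _ _) | LF _ (Imp _ _) | LF _ (Cond _ _) | All _ _ => True
  | _ => False
  end.

(* The premisses [(Γ', Δ')] of the rule for [P] (on the left, resp. right), as
   additions to the context; [y] and [k] are the eigenlabels of L∃, R∀, L|, R>. *)
Definition premsL (P : lform) (y : wlab) (k : nat) : list (list lform * list lform) :=
  match P with
  | LF x (And A B) => [([LF x A; LF x B], [])]
  | LF x (Or A B) => [([LF x A], []); ([LF x B], [])]
  | LF x (Imp A B) => [([], [LF x A]); ([LF x B], [])]
  | Ex a A => [([InW y a; LF y A], [])]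
  | Cnd x a A B => [([InN (NV k) x; Sub (NV k) a; Ex (NV k) A; All (NV k) (Imp A B)], [])]
  | _ => []
  end.
Definition premsR (P : lform) (y : wlab) (k : nat) : list (list lform * list lform) :=
  match P with
  | LF x (And A B) => [([], [LF x A]); ([], [LF x B])]
  | LF x (Or A B) => [([], [LF x A; LF x B])]
  | LF x (Imp A B) => [([LF x A], [LF x B])]
  | LF x (Cond A B) => [([InN (NV k) x; Ex (NV k) A], [Cnd x (NV k) A B])]
  | All a A => [([InW y a], [LF y A])]
  | _ => []
  end.

(* [rule l m Lc Rc NL NR Ps ew en]: a rule instance of CL^S whose conclusion is
   [Lc, NL, Γ ⇒ Δ, NR, Rc] and whose premisses are [Lp, NL, Γ ⇒ Δ, NR, Rp] for
   [(Lp, Rp)] in [Ps]; the principal formulas [Lc], [Rc] disappear from the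
   premisses while [NL], [NR] are repeated, and [ew], [en] are the eigenlabels. *)
Inductive rule (l : level) (m : modext) : list lform -> list lform -> list lform -> list lform ->
   list (list lform * list lform) -> option wlab -> option nat -> Prop :=
| R_init : forall x p, rule l m [LF x (Var p)] [LF x (Var p)] [] [] [] None None
| R_botL : forall x, rule l m [LF x Bot] [] [] [] [] None None
| R_logL : forall P y k, logicalL P -> rule l m [P] [] [] [] (premsL P y k) (Some y) (Some k)
| R_logR : forall P y k, logicalR P -> rule l m [] [P] [] [] (premsR P y k) (Some y) (Some k)
| R_LAll : forall x a A, rule l m [] [] [InW x a; All a A] [] [([LF x A], [])] None None
| R_REx : forall x a A, rule l m [] [] [InW x a] [Ex a A] [([], [LF x A])] None None
| R_LCond : forall a x A B, rule l m [] [] [InN a x; LF x (Cond A B)] []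
     [([], [Ex a A]); ([Cnd x a A B], [])] None None
| R_RBar : forall c a x A B, rule l m [] [] [InN c x; Sub c a] [Cnd x a A B]
     [([], [Ex c A]); ([], [All c (Imp A B)])] None None
| R_Ref : forall a, rule l m [] [] [] [] [([Sub a a], [])] None None
| R_Tr : forall a b c, rule l m [] [] [Sub c b; Sub b a] [] [([Sub c a], [])] None None
| R_LSub : forall x a b, rule l m [] [] [InW x a; Sub a b] [] [([InW x b], [])] None None
| R_N : forall n x, hasN l -> rule l m [] [] [] [] [([InN (NV n) x], [])] None (Some n)
| R_0 : forall y a x, hasN l -> rule l m [] [] [InN a x] [] [([InW y a], [])] (Some y) None
| R_T : forall n x, hasT l -> rule l m [] [] [] [] [([InW x (NV n); InN (NV n) x], [])] None (Some n)
| R_W : forall a x, hasW l -> rule l m [] [] [InN a x] [] [([InW x a], [])] None None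
| R_Single : forall x, hasC l -> rule l m [] [] [InN (NS x) x] [] [([InW x (NS x)], [])] None None
| R_C : forall a x, hasC l -> rule l m [] [] [InN a x] [] [([InN (NS x) x; Sub (NS x) a], [])] None None
| R_Repl1 : forall t x y, hasC l -> rule l m [] [] [InW y (NS x); instAt t x] [] [([instAt t y], [])] None None
(* CL^C has no contracted Repl2, so its instance with coinciding principal atoms is excluded *)
| R_Repl2 : forall t x y, hasC l -> InW y (NS x) <> instAt t y ->
     rule l m [] [] [InW y (NS x); instAt t y] [] [([instAt t x], [])] None None
| R_U1 : forall n a b x y z, m = MU ->
     rule l m [] [] [InN a x; InW y a; InN b y; InW z b] [] [([InW z (NV n); InN (NV n) x], [])] None (Some n)
| R_U2 : forall n a b x y z, m = MU ->
     rule l m [] [] [InN a x; InW y a; InN b x; InW z b] [] [([InW z (NV n); InN (NV n) y], [])] None (Some n)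
| R_A1 : forall a b x y, m = MA ->
     rule l m [] [] [InN a x; InW y a; InN b x] [] [([InN b y], [])] None None
| R_A2 : forall a b x y, m = MA ->
     rule l m [] [] [InN a x; InW y a; InN b y] [] [([InN b x], [])] None None.

Definition eigen_fresh (ew : option wlab) (en : option nat) (L : list lform) : Prop :=
  (forall y, ew = Some y -> ~ In y (wlabs L)) /\ (forall n, en = Some n -> ~ In n (nvars L)).

Lemma eigen_fresh_incl ew en L L' : incl L L' -> eigen_fresh ew en L' -> eigen_fresh ew en L.
Proof.
  intros H [Hw Hn]. split; intros ? E; [eapply fresh_wlabs|eapply fresh_nvars]; eauto.
Qed.

Lemma eigen_fresh_none L : eigen_fresh None None L.
Proof. split; discriminate. Qed.

(* Side formulas need only be members of the context, so repeated relational
   atoms can always be contracted. *)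
Inductive der (l : level) (m : modext) : list lform -> list lform -> Prop :=
| der_rule : forall Lc Rc NL NR Ps ew en G0 D0 G D,
    rule l m Lc Rc NL NR Ps ew en ->
    Permutation G (Lc ++ G0) -> Permutation D (Rc ++ D0) ->
    incl NL G0 -> incl NR D0 ->
    eigen_fresh ew en (G ++ D) ->
    (forall Lp Rp, In (Lp, Rp) Ps -> der l m (Lp ++ G0) (Rp ++ D0)) ->
    der l m G D.

Lemma der_perm l m G D G' D' :
  der l m G D -> Permutation G G' -> Permutation D D' -> der l m G' D'.
Proof.
  intros [Lc Rc NL NR Ps ew en G0 D0 G1 D1 Hr HG HD HNL HNR Hf Hp] HG' HD'.
  eapply der_rule; eauto.
  - eapply Permutation_trans; [apply Permutation_sym|]; eauto.
  - eapply Permutation_trans; [apply Permutation_sym|]; eauto.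
  - eapply eigen_fresh_incl; [|exact Hf].
    apply Permutation_incl, Permutation_app; apply Permutation_sym; auto.
Qed.

Ltac new_label_fresh :=
  first [ apply new_wlab_fresh | apply new_nvar_fresh ]; incl_tac.

Ltac prems_tac := intros ? ? Hprem; simpl in Hprem;
  repeat destruct Hprem as [Hprem|Hprem]; try contradiction; inversion Hprem; subst; simpl; auto.

Section PrimitiveRules.
Variables (l : level) (m : modext).

Lemma der_logL P y k G D : logicalL P ->
  ~ In y (wlabs ((P :: G) ++ D)) -> ~ In k (nvars ((P :: G) ++ D)) ->
  (forall Lp Rp, In (Lp, Rp) (premsL P y k) -> der l m (Lp ++ G) (Rp ++ D)) -> der l m (P :: G) D.
Proof.
  intros HP Hy Hk H. eapply der_rule with (G0 := G) (D0 := D);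
    [apply (R_logL l m P y k HP)|apply Permutation_refl|apply Permutation_refl|
     apply incl_nil_l|apply incl_nil_l| |exact H].
  split; intros ? E; injection E as <-; auto.
Qed.

Lemma der_logR P y k G D : logicalR P ->
  ~ In y (wlabs (G ++ P :: D)) -> ~ In k (nvars (G ++ P :: D)) ->
  (forall Lp Rp, In (Lp, Rp) (premsR P y k) -> der l m (Lp ++ G) (Rp ++ D)) -> der l m G (P :: D).
Proof.
  intros HP Hy Hk H. eapply der_rule with (G0 := G) (D0 := D);
    [apply (R_logR l m P y k HP)|apply Permutation_refl|apply Permutation_refl|
     apply incl_nil_l|apply incl_nil_l| |exact H].
  split; intros ? E; injection E as <-; auto.
Qed.

Lemma der_keep NL NR Ps ew en G D : rule l m [] [] NL NR Ps ew en ->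
  incl NL G -> incl NR D -> eigen_fresh ew en (G ++ D) ->
  (forall Lp Rp, In (Lp, Rp) Ps -> der l m (Lp ++ G) (Rp ++ D)) -> der l m G D.
Proof. intros. eapply der_rule; eauto; apply Permutation_refl. Qed.

Lemma der_init x p G D : der l m (LF x (Var p) :: G) (LF x (Var p) :: D).
Proof.
  eapply der_rule with (G0 := G) (D0 := D); [apply R_init|apply Permutation_refl|apply Permutation_refl|
    apply incl_nil_l|apply incl_nil_l|apply eigen_fresh_none|intros ? ? []].
Qed.

Lemma der_botL x G D : der l m (LF x Bot :: G) D.
Proof.
  eapply der_rule with (G0 := G) (D0 := D); [apply R_botL|apply Permutation_refl|apply Permutation_refl|
    apply incl_nil_l|apply incl_nil_l|apply eigen_fresh_none|intros ? ? []].
Qed.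

Ltac logL := match goal with |- der _ _ ?G ?D =>
  apply (der_logL _ (new_wlab (G ++ D)) (new_nvar (G ++ D)));
  [exact I|new_label_fresh|new_label_fresh|prems_tac] end.
Ltac logR := match goal with |- der _ _ ?G ?D =>
  apply (der_logR _ (new_wlab (G ++ D)) (new_nvar (G ++ D)));
  [exact I|new_label_fresh|new_label_fresh|prems_tac] end.

Lemma der_andL x A B G D : der l m (LF x A :: LF x B :: G) D -> der l m (LF x (And A B) :: G) D.
Proof. intro. logL. Qed.
Lemma der_orL x A B G D :
  der l m (LF x A :: G) D -> der l m (LF x B :: G) D -> der l m (LF x (Or A B) :: G) D.
Proof. intros. logL. Qed.
Lemma der_impL x A B G D :
  der l m G (LF x A :: D) -> der l m (LF x B :: G) D -> der l m (LF x (Imp A B) :: G) D.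
Proof. intros. logL. Qed.
Lemma der_andR x A B G D :
  der l m G (LF x A :: D) -> der l m G (LF x B :: D) -> der l m G (LF x (And A B) :: D).
Proof. intros. logR. Qed.
Lemma der_orR x A B G D : der l m G (LF x A :: LF x B :: D) -> der l m G (LF x (Or A B) :: D).
Proof. intro. logR. Qed.
Lemma der_impR x A B G D : der l m (LF x A :: G) (LF x B :: D) -> der l m G (LF x (Imp A B) :: D).
Proof. intro. logR. Qed.

Lemma der_LEx y a A G D : ~ In y (wlabs ((Ex a A :: G) ++ D)) ->
  der l m (InW y a :: LF y A :: G) D -> der l m (Ex a A :: G) D.
Proof.
  intros Hy H. apply (der_logL _ y (new_nvar ((Ex a A :: G) ++ D))); [exact I|auto|new_label_fresh|prems_tac].
Qed.
Lemma der_LBar n x a A B G D : ~ In n (nvars ((Cnd x a A B :: G) ++ D)) ->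
  der l m (InN (NV n) x :: Sub (NV n) a :: Ex (NV n) A :: All (NV n) (Imp A B) :: G) D ->
  der l m (Cnd x a A B :: G) D.
Proof.
  intros Hn H. apply (der_logL _ (new_wlab ((Cnd x a A B :: G) ++ D)) n); [exact I|new_label_fresh|auto|prems_tac].
Qed.
Lemma der_RCond n x A B G D : ~ In n (nvars (G ++ LF x (Cond A B) :: D)) ->
  der l m (InN (NV n) x :: Ex (NV n) A :: G) (Cnd x (NV n) A B :: D) ->
  der l m G (LF x (Cond A B) :: D).
Proof.
  intros Hn H. apply (der_logR _ (new_wlab (G ++ LF x (Cond A B) :: D)) n); [exact I|new_label_fresh|auto|prems_tac].
Qed.
Lemma der_RAll y a A G D : ~ In y (wlabs (G ++ All a A :: D)) ->
  der l m (InW y a :: G) (LF y A :: D) -> der l m G (All a A :: D).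
Proof.
  intros Hy H. apply (der_logR _ y (new_nvar (G ++ All a A :: D))); [exact I|auto|new_label_fresh|prems_tac].
Qed.

Ltac rule_keep r := apply (der_keep _ _ _ _ _ _ _ r); [incl_tac|incl_tac|
  try apply eigen_fresh_none; split; intros ? E; try discriminate; injection E as <-; auto|prems_tac].

Lemma der_LAll x a A G D : In (InW x a) G -> In (All a A) G -> der l m (LF x A :: G) D -> der l m G D.
Proof. intros. rule_keep (R_LAll l m x a A). Qed.
Lemma der_REx x a A G D : In (InW x a) G -> In (Ex a A) D -> der l m G (LF x A :: D) -> der l m G D.
Proof. intros. rule_keep (R_REx l m x a A). Qed.
Lemma der_LCond a x A B G D : In (InN a x) G -> In (LF x (Cond A B)) G ->
  der l m G (Ex a A :: D) -> der l m (Cnd x a A B :: G) D -> der l m G D.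
Proof. intros. rule_keep (R_LCond l m a x A B). Qed.
Lemma der_RBar c a x A B G D : In (InN c x) G -> In (Sub c a) G -> In (Cnd x a A B) D ->
  der l m G (Ex c A :: D) -> der l m G (All c (Imp A B) :: D) -> der l m G D.
Proof. intros. rule_keep (R_RBar l m c a x A B). Qed.
Lemma der_Ref a G D : der l m (Sub a a :: G) D -> der l m G D.
Proof. intros. rule_keep (R_Ref l m a). Qed.
Lemma der_Tr a b c G D : In (Sub c b) G -> In (Sub b a) G -> der l m (Sub c a :: G) D -> der l m G D.
Proof. intros. rule_keep (R_Tr l m a b c). Qed.
Lemma der_LSub x a b G D : In (InW x a) G -> In (Sub a b) G -> der l m (InW x b :: G) D -> der l m G D.
Proof. intros. rule_keep (R_LSub l m x a b). Qed.
Lemma der_N n x G D : hasN l -> ~ In n (nvars (G ++ D)) ->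
  der l m (InN (NV n) x :: G) D -> der l m G D.
Proof. intros. rule_keep (R_N l m n x H). Qed.
Lemma der_0 y a x G D : hasN l -> In (InN a x) G -> ~ In y (wlabs (G ++ D)) ->
  der l m (InW y a :: G) D -> der l m G D.
Proof. intros. rule_keep (R_0 l m y a x H). Qed.
Lemma der_T n x G D : hasT l -> ~ In n (nvars (G ++ D)) ->
  der l m (InW x (NV n) :: InN (NV n) x :: G) D -> der l m G D.
Proof. intros. rule_keep (R_T l m n x H). Qed.
Lemma der_W a x G D : hasW l -> In (InN a x) G -> der l m (InW x a :: G) D -> der l m G D.
Proof. intros. rule_keep (R_W l m a x H). Qed.
Lemma der_Single x G D : hasC l -> In (InN (NS x) x) G -> der l m (InW x (NS x) :: G) D -> der l m G D.
Proof. intros. rule_keep (R_Single l m x H). Qed.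
Lemma der_C a x G D : hasC l -> In (InN a x) G ->
  der l m (InN (NS x) x :: Sub (NS x) a :: G) D -> der l m G D.
Proof. intros. rule_keep (R_C l m a x H). Qed.
Lemma der_Repl1 t x y G D : hasC l -> In (InW y (NS x)) G -> In (instAt t x) G ->
  der l m (instAt t y :: G) D -> der l m G D.
Proof. intros. rule_keep (R_Repl1 l m t x y H). Qed.
Lemma der_Repl2 t x y G D : hasC l -> InW y (NS x) <> instAt t y ->
  In (InW y (NS x)) G -> In (instAt t y) G -> der l m (instAt t x :: G) D -> der l m G D.
Proof. intros. rule_keep (R_Repl2 l m t x y H H0). Qed.
Lemma der_U1 n a b x y z G D : m = MU ->
  In (InN a x) G -> In (InW y a) G -> In (InN b y) G -> In (InW z b) G -> ~ In n (nvars (G ++ D)) ->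
  der l m (InW z (NV n) :: InN (NV n) x :: G) D -> der l m G D.
Proof. intros. rule_keep (R_U1 l m n a b x y z H). Qed.
Lemma der_U2 n a b x y z G D : m = MU ->
  In (InN a x) G -> In (InW y a) G -> In (InN b x) G -> In (InW z b) G -> ~ In n (nvars (G ++ D)) ->
  der l m (InW z (NV n) :: InN (NV n) y :: G) D -> der l m G D.
Proof. intros. rule_keep (R_U2 l m n a b x y z H). Qed.
Lemma der_A1 a b x y G D : m = MA ->
  In (InN a x) G -> In (InW y a) G -> In (InN b x) G -> der l m (InN b y :: G) D -> der l m G D.
Proof. intros. rule_keep (R_A1 l m a b x y H). Qed.
Lemma der_A2 a b x y G D : m = MA ->
  In (InN a x) G -> In (InW y a) G -> In (InN b y) G -> der l m (InN b x :: G) D -> der l m G D.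
Proof. intros. rule_keep (R_A2 l m a b x y H). Qed.

End PrimitiveRules.

(** * Substitution of labels *)

Definition sub_nlab (sw : wlab -> wlab) (sn : nat -> nlab) (a : nlab) : nlab :=
  match a with NV n => sn n | NS y => NS (sw y) end.

Definition sub_lform sw sn (F : lform) : lform :=
  match F with
  | InN a y => InN (sub_nlab sw sn a) (sw y)
  | InW y a => InW (sw y) (sub_nlab sw sn a)
  | Sub a b => Sub (sub_nlab sw sn a) (sub_nlab sw sn b)
  | LF y A => LF (sw y) A
  | Ex a A => Ex (sub_nlab sw sn a) A
  | All a A => All (sub_nlab sw sn a) A
  | Cnd y a A B => Cnd (sw y) (sub_nlab sw sn a) A B
  end.

Definition sub_atomT sw sn (t : atomT) : atomT :=
  match t with
  | AProp p => AProp p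
  | AIn a => AIn (sub_nlab sw sn a)
  | AN a => AN (sub_nlab sw sn a)
  | ASing z => ASing (sw z)
  end.

Definition sub_prem sw sn (p : list lform * list lform) : list lform * list lform :=
  (map (sub_lform sw sn) (fst p), map (sub_lform sw sn) (snd p)).

Lemma sub_instAt sw sn t x : sub_lform sw sn (instAt t x) = instAt (sub_atomT sw sn t) (sw x).
Proof. destruct t; reflexivity. Qed.

Lemma sub_lform_agree sw sn sw' sn' F :
  (forall y, In y (lform_wlabs F) -> sw y = sw' y) -> (forall n, In n (lform_nvars F) -> sn n = sn' n) ->
  sub_lform sw sn F = sub_lform sw' sn' F.
Proof.
  intros Hw Hn. destruct F; simpl in *;
  repeat match goal with a : nlab |- _ => destruct a end; simpl in *;
  f_equal; try apply Hw; try apply Hn; simpl; auto with datatypes;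
  try (f_equal; first [apply Hw | apply Hn]; simpl; auto with datatypes).
Qed.

Lemma map_sub_agree sw sn sw' sn' L :
  (forall y, In y (wlabs L) -> sw y = sw' y) -> (forall n, In n (nvars L) -> sn n = sn' n) ->
  map (sub_lform sw sn) L = map (sub_lform sw' sn') L.
Proof.
  intros Hw Hn. apply map_ext_in. intros F HF. apply sub_lform_agree.
  - intros y Hy. apply Hw, in_wlabs. eauto.
  - intros n Hn'. apply Hn, in_nvars. eauto.
Qed.

Lemma sub_lform_id F : sub_lform id NV F = F.
Proof. destruct F; repeat match goal with a : nlab |- _ => destruct a end; reflexivity. Qed.

Lemma map_sub_id L : map (sub_lform id NV) L = L.
Proof. induction L as [|F L IH]; simpl; f_equal; auto using sub_lform_id. Qed.

Lemma map_sub_fix sw sn L :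
  (forall y, In y (wlabs L) -> sw y = y) -> (forall n, In n (nvars L) -> sn n = NV n) ->
  map (sub_lform sw sn) L = L.
Proof. intros Hw Hn. rewrite <- (map_sub_id L) at 2. apply map_sub_agree; auto. Qed.

Lemma logicalL_sub sw sn P : logicalL P -> logicalL (sub_lform sw sn P).
Proof. destruct P; simpl; auto. Qed.
Lemma logicalR_sub sw sn P : logicalR P -> logicalR (sub_lform sw sn P).
Proof. destruct P; simpl; auto. Qed.

Lemma premsL_sub sw sn P y k k' : sn k = NV k' ->
  map (sub_prem sw sn) (premsL P y k) = premsL (sub_lform sw sn P) (sw y) k'.
Proof. intro H. destruct P; try destruct f; unfold sub_prem; simpl; try rewrite H; reflexivity. Qed.
Lemma premsR_sub sw sn P y k k' : sn k = NV k' ->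
  map (sub_prem sw sn) (premsR P y k) = premsR (sub_lform sw sn P) (sw y) k'.
Proof. intro H. destruct P; try destruct f; unfold sub_prem; simpl; try rewrite H; reflexivity. Qed.

Definition upd_w (sw : wlab -> wlab) (ew : option wlab) (z : wlab) : wlab -> wlab :=
  match ew with Some y => fun v => if Nat.eq_dec v y then z else sw v | None => sw end.
Definition upd_n (sn : nat -> nlab) (en : option nat) (c : nlab) : nat -> nlab :=
  match en with Some k => fun v => if Nat.eq_dec v k then c else sn v | None => sn end.

Lemma upd_w_eq sw y z : upd_w sw (Some y) z y = z.
Proof. simpl. destruct (Nat.eq_dec y y); congruence. Qed.
Lemma upd_n_eq sn k c : upd_n sn (Some k) c k = c.
Proof. simpl. destruct (Nat.eq_dec k k); congruence. Qed.
Lemma upd_w_other sw ew z v : ew <> Some v -> upd_w sw ew z v = sw v.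
Proof. destruct ew as [y|]; simpl; auto. destruct (Nat.eq_dec v y); congruence. Qed.
Lemma upd_n_other sn en c v : en <> Some v -> upd_n sn en c v = sn v.
Proof. destruct en as [k|]; simpl; auto. destruct (Nat.eq_dec v k); congruence. Qed.

Lemma map_sub_upd sw sn ew en z c L : eigen_fresh ew en L ->
  map (sub_lform sw sn) L = map (sub_lform (upd_w sw ew z) (upd_n sn en c)) L.
Proof.
  intros [Hw Hn]. apply map_sub_agree; intros v Hv; symmetry;
    [apply upd_w_other|apply upd_n_other]; intro E; [apply (Hw v)|apply (Hn v)]; auto.
Qed.

(* The substitution image of a rule instance is a rule instance, except for
   those instances of Repl2 that it turns into the excluded one. *)
Lemma rule_sub l m Lc Rc NL NR Ps ew en sw sn z k :
  rule l m Lc Rc NL NR Ps ew en ->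
  (forall y, ew = Some y -> sw y = z) -> (forall n, en = Some n -> sn n = NV k) ->
  rule l m (map (sub_lform sw sn) Lc) (map (sub_lform sw sn) Rc) (map (sub_lform sw sn) NL)
    (map (sub_lform sw sn) NR) (map (sub_prem sw sn) Ps) (option_map (fun _ => z) ew)
    (option_map (fun _ => k) en)
  \/ (hasC l /\ Lc = [] /\ Rc = [] /\ NR = [] /\ ew = None /\ en = None /\
      exists x Lp, Ps = [(Lp, [])] /\ map (sub_lform sw sn) Lp = [InW x (NS x)]).
Proof.
  intros H Hw Hn. destruct H; simpl; try (left; constructor; assumption).
  - left. rewrite (premsL_sub _ _ _ _ _ k (Hn _ eq_refl)), <- (Hw _ eq_refl).
    constructor. apply logicalL_sub; auto.
  - left. rewrite (premsR_sub _ _ _ _ _ k (Hn _ eq_refl)), <- (Hw _ eq_refl).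
    constructor. apply logicalR_sub; auto.
  - left. unfold sub_prem; simpl. rewrite (Hn _ eq_refl). constructor; auto.
  - left. unfold sub_prem; simpl. rewrite <- (Hw _ eq_refl). constructor; auto.
  - left. unfold sub_prem; simpl. rewrite (Hn _ eq_refl). constructor; auto.
  - left. unfold sub_prem; simpl. rewrite !sub_instAt. constructor; auto.
  - unfold sub_prem; simpl. rewrite !sub_instAt.
    destruct (lform_eq_dec (InW (sw y) (NS (sw x))) (instAt (sub_atomT sw sn t) (sw y))) as [e|ne].
    + right. repeat split; auto. exists (sw x), [instAt t x]. split; auto. simpl.
      rewrite sub_instAt. destruct t; simpl in e; try discriminate; inversion e; simpl; congruence.
    + left. constructor; auto.
  - left. unfold sub_prem; simpl. rewrite (Hn _ eq_refl). constructor; auto.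
  - left. unfold sub_prem; simpl. rewrite (Hn _ eq_refl). constructor; auto.
Qed.

Lemma der_InW_self l m x n G D : hasC l -> ~ In n (nvars (G ++ D)) ->
  der l m (InW x (NS x) :: InN (NS x) x :: Sub (NS x) (NV n) :: InN (NV n) x :: G) D ->
  der l m G D.
Proof.
  intros HC Hn H. assert (HN : hasN l) by (unfold hasC, hasN in *; lia).
  apply (der_N l m n x G D HN Hn). apply (der_C l m (NV n) x); [auto|left; auto|].
  apply (der_Single l m x); [auto|left; auto|exact H].
Qed.

Theorem der_sub l m G D : der l m G D -> forall sw sn G' D',
  der l m (map (sub_lform sw sn) G ++ G') (map (sub_lform sw sn) D ++ D').
Proof.
  induction 1 as [Lc Rc NL NR Ps ew en G0 D0 G D Hr HG HD HNL HNR Hf Hp IH].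
  intros sw sn G' D'.
  set (NG := map (sub_lform sw sn) G ++ G'). set (ND := map (sub_lform sw sn) D ++ D').
  (* the eigenlabels of the last rule are sent to labels new for the image *)
  set (z := new_wlab (NG ++ ND)). set (k := new_nvar (NG ++ ND)).
  set (sw' := upd_w sw ew z). set (sn' := upd_n sn en (NV k)).
  assert (HGe : map (sub_lform sw sn) G = map (sub_lform sw' sn') G)
    by (apply map_sub_upd; eapply eigen_fresh_incl; [|exact Hf]; incl_tac).
  assert (HDe : map (sub_lform sw sn) D = map (sub_lform sw' sn') D)
    by (apply map_sub_upd; eapply eigen_fresh_incl; [|exact Hf]; incl_tac).
  destruct (rule_sub _ _ _ _ _ _ _ _ _ sw' sn' z k Hr) as [Hr'|Hdeg].
  - intros y ->. apply upd_w_eq.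
  - intros n ->. apply upd_n_eq.
  - eapply der_rule with (G0 := map (sub_lform sw' sn') G0 ++ G') (D0 := map (sub_lform sw' sn') D0 ++ D');
      [exact Hr'|..].
    + unfold NG. rewrite HGe, app_assoc, <- map_app. apply Permutation_app_tail, Permutation_map; auto.
    + unfold ND. rewrite HDe, app_assoc, <- map_app. apply Permutation_app_tail, Permutation_map; auto.
    + apply incl_appl, incl_map; auto.
    + apply incl_appl, incl_map; auto.
    + split; intros ? E; destruct ew, en; simpl in E; try discriminate; injection E as <-;
        first [apply new_wlab_fresh | apply new_nvar_fresh]; apply incl_refl.
    + intros Lp' Rp' (p & Hpe & HPs) % in_map_iff. destruct p as [Lp Rp].
      injection Hpe as <- <-. specialize (IH Lp Rp HPs sw' sn' G' D').
      rewrite !map_app, <- !app_assoc in IH. exact IH.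
  - destruct Hdeg as (HC & -> & -> & -> & -> & -> & x & Lp & -> & HLp).
    apply (der_InW_self l m x (new_nvar (NG ++ ND))); [exact HC|new_label_fresh|].
    specialize (IH Lp [] (or_introl eq_refl) sw sn
                  ([InN (NS x) x; Sub (NS x) (NV (new_nvar (NG ++ ND))); InN (NV (new_nvar (NG ++ ND))) x] ++ G') D').
    rewrite map_app in IH. unfold sw', sn' in HLp. simpl in HLp. rewrite HLp in IH.
    eapply der_perm; [exact IH| |].
    + simpl in HG |- *. eapply Permutation_trans;
        [apply perm_skip, Permutation_app_tail, Permutation_map, Permutation_sym, HG|unfold NG; perm].
    + apply Permutation_app_tail, Permutation_map, Permutation_sym, HD.
Qed.

Corollary der_weaken l m G D G' D' : der l m G D -> der l m (G ++ G') (D ++ D').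
Proof. intro H. pose proof (der_sub _ _ _ _ H id NV G' D') as H'. rewrite !map_sub_id in H'. exact H'. Qed.

Lemma der_sub_frame l m sw sn L R G D :
  (forall y, In y (wlabs (G ++ D)) -> sw y = y) -> (forall n, In n (nvars (G ++ D)) -> sn n = NV n) ->
  der l m (L ++ G) (R ++ D) -> der l m (map (sub_lform sw sn) L ++ G) (map (sub_lform sw sn) R ++ D).
Proof.
  intros Hw Hn H. pose proof (der_sub _ _ _ _ H sw sn [] []) as H'.
  rewrite !app_nil_r, !map_app in H'.
  rewrite !wlabs_app in Hw. rewrite !nvars_app in Hn.
  rewrite (map_sub_fix _ _ G), (map_sub_fix _ _ D) in H'; [exact H'|..];
    intros; first [apply Hw | apply Hn]; auto with datatypes.
Qed.

(** * Invertibility of the logical rules *)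

Definition ren (y0 y : wlab) (k0 k : nat) : lform -> lform :=
  sub_lform (upd_w id (Some y0) y) (upd_n NV (Some k0) (NV k)).

Lemma der_rename l m y0 y k0 k L R G D :
  ~ In y0 (wlabs (G ++ D)) -> ~ In k0 (nvars (G ++ D)) ->
  der l m (L ++ G) (R ++ D) -> der l m (map (ren y0 y k0 k) L ++ G) (map (ren y0 y k0 k) R ++ D).
Proof.
  intros Hy Hk. apply der_sub_frame; intros v Hv; [apply upd_w_other|apply upd_n_other];
    intro E; injection E as ->; auto.
Qed.

Lemma ren_fresh y0 y k0 k F :
  ~ In y0 (lform_wlabs F) -> ~ In k0 (lform_nvars F) -> ren y0 y k0 k F = F.
Proof.
  intros Hy Hk. unfold ren. rewrite <- (sub_lform_id F) at 2.
  apply sub_lform_agree; intros v Hv; [apply upd_w_other|apply upd_n_other]; intro E; injection E as ->; auto.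
Qed.

Lemma premsL_ren P y0 y k0 k : ~ In y0 (lform_wlabs P) -> ~ In k0 (lform_nvars P) ->
  map (sub_prem (upd_w id (Some y0) y) (upd_n NV (Some k0) (NV k))) (premsL P y0 k0) = premsL P y k.
Proof.
  intros Hy Hk. rewrite (premsL_sub _ _ _ _ _ k (upd_n_eq _ _ _)), upd_w_eq.
  fold (ren y0 y k0 k P). rewrite ren_fresh; auto.
Qed.
Lemma premsR_ren P y0 y k0 k : ~ In y0 (lform_wlabs P) -> ~ In k0 (lform_nvars P) ->
  map (sub_prem (upd_w id (Some y0) y) (upd_n NV (Some k0) (NV k))) (premsR P y0 k0) = premsR P y k.
Proof.
  intros Hy Hk. rewrite (premsR_sub _ _ _ _ _ k (upd_n_eq _ _ _)), upd_w_eq.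
  fold (ren y0 y k0 k P). rewrite ren_fresh; auto.
Qed.

Lemma rule_Lc_shape l m Lc Rc NL NR Ps ew en F :
  rule l m Lc Rc NL NR Ps ew en -> In F Lc ->
  Lc = [F] /\ ((~ logicalL F /\ Ps = [] /\ NL = [] /\ NR = [] /\ ew = None /\ en = None) \/
               (logicalL F /\ Rc = [] /\ NL = [] /\ NR = [] /\
                exists y k, Ps = premsL F y k /\ ew = Some y /\ en = Some k)).
Proof.
  intros H HF. destruct H; simpl in HF; try contradiction; destruct HF as [<-|[]]; split; auto;
  first [left; repeat split; simpl; auto; fail | right; repeat split; eauto].
Qed.
Lemma rule_Rc_shape l m Lc Rc NL NR Ps ew en F :
  rule l m Lc Rc NL NR Ps ew en -> In F Rc ->
  Rc = [F] /\ ((~ logicalR F /\ Ps = [] /\ NL = [] /\ NR = [] /\ ew = None /\ en = None) \/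
               (logicalR F /\ Lc = [] /\ NL = [] /\ NR = [] /\
                exists y k, Ps = premsR F y k /\ ew = Some y /\ en = Some k)).
Proof.
  intros H HF. destruct H; simpl in HF; try contradiction; destruct HF as [<-|[]]; split; auto;
  first [left; repeat split; simpl; auto; fail | right; repeat split; eauto].
Qed.

Lemma rule_NL_not_logicalL l m Lc Rc NL NR Ps ew en P :
  rule l m Lc Rc NL NR Ps ew en -> In P NL -> ~ logicalL P.
Proof.
  intros H HP. destruct H; simpl in HP; repeat destruct HP as [<-|HP]; try contradiction; simpl; auto;
  match goal with t : atomT |- _ => destruct t; simpl; auto end.
Qed.
Lemma rule_NR_not_logicalR l m Lc Rc NL NR Ps ew en P :
  rule l m Lc Rc NL NR Ps ew en -> In P NR -> ~ logicalR P.
Proof. intros H HP. destruct H; simpl in HP; repeat destruct HP as [<-|HP]; try contradiction; simpl; auto. Qed.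

(* Dummy formulas carrying the eigenlabels, so that new labels avoid them. *)
Definition eigen_lforms (ew : option wlab) (en : option nat) : list lform :=
  match ew with Some y => [LF y Bot] | None => [] end ++
  match en with Some n => [Ex (NV n) Bot] | None => [] end.

Lemma eigen_lforms_fresh ew en y k :
  ~ In y (wlabs (eigen_lforms ew en)) -> ~ In k (nvars (eigen_lforms ew en)) -> ew <> Some y /\ en <> Some k.
Proof.
  intros Hy Hk. split; intros ->; [apply Hy|apply Hk]; unfold eigen_lforms;
    [|destruct ew]; rewrite ?wlabs_app, ?nvars_app; simpl; auto with datatypes.
Qed.

Lemma eigen_fresh_app ew en L L' :
  eigen_fresh ew en L -> eigen_fresh ew en L' -> eigen_fresh ew en (L ++ L').
Proof.
  intros [Hw Hn] [Hw' Hn']. split; intros v Ev; rewrite ?wlabs_app, ?nvars_app, in_app_iff;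
    [specialize (Hw v Ev); specialize (Hw' v Ev)|specialize (Hn v Ev); specialize (Hn' v Ev)]; tauto.
Qed.

Lemma eigen_fresh_premsL ew en P y k Lq Rq : In (Lq, Rq) (premsL P y k) ->
  eigen_fresh ew en [P] -> ew <> Some y -> en <> Some k -> eigen_fresh ew en (Lq ++ Rq).
Proof.
  intros HP [Hw Hn] Hy Hk. unfold wlabs, nvars in Hw, Hn; simpl in Hw, Hn.
  split; intros v -> Hv;
  destruct P; try destruct f; simpl in HP; repeat destruct HP as [HP|HP]; try contradiction;
  injection HP as <- <-; unfold wlabs, nvars in Hv; simpl in *;
  repeat match goal with a : nlab |- _ => destruct a end; simpl in *; rewrite ?app_nil_r in *;
  intuition (subst; eauto).
Qed.
Lemma eigen_fresh_premsR ew en P y k Lq Rq : In (Lq, Rq) (premsR P y k) ->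
  eigen_fresh ew en [P] -> ew <> Some y -> en <> Some k -> eigen_fresh ew en (Lq ++ Rq).
Proof.
  intros HP [Hw Hn] Hy Hk. unfold wlabs, nvars in Hw, Hn; simpl in Hw, Hn.
  split; intros v -> Hv;
  destruct P; try destruct f; simpl in HP; repeat destruct HP as [HP|HP]; try contradiction;
  injection HP as <- <-; unfold wlabs, nvars in Hv; simpl in *;
  repeat match goal with a : nlab |- _ => destruct a end; simpl in *; rewrite ?app_nil_r in *;
  intuition (subst; eauto).
Qed.

Section Invertibility.
Variables (l : level) (m : modext).

Lemma der_premsL_eigen P y0 k0 y k G D :
  ~ In y0 (wlabs ((P :: G) ++ D)) -> ~ In k0 (nvars ((P :: G) ++ D)) ->
  (forall Lq Rq, In (Lq, Rq) (premsL P y0 k0) -> der l m (Lq ++ G) (Rq ++ D)) ->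
  forall Lp Rp, In (Lp, Rp) (premsL P y k) -> der l m (Lp ++ G) (Rp ++ D).
Proof.
  intros Hy Hk H Lp Rp HLR.
  rewrite <- (premsL_ren P y0 y k0 k) in HLR;
    [|eapply fresh_lform_wlabs|eapply fresh_lform_nvars]; eauto; mem_tac.
  apply in_map_iff in HLR as ([Lq Rq] & E & HLq). injection E as <- <-.
  apply der_rename; [eapply fresh_wlabs|eapply fresh_nvars|]; eauto; incl_tac.
Qed.

Lemma der_premsR_eigen P y0 k0 y k G D :
  ~ In y0 (wlabs (G ++ P :: D)) -> ~ In k0 (nvars (G ++ P :: D)) ->
  (forall Lq Rq, In (Lq, Rq) (premsR P y0 k0) -> der l m (Lq ++ G) (Rq ++ D)) ->
  forall Lp Rp, In (Lp, Rp) (premsR P y k) -> der l m (Lp ++ G) (Rp ++ D).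
Proof.
  intros Hy Hk H Lp Rp HLR.
  rewrite <- (premsR_ren P y0 y k0 k) in HLR;
    [|eapply fresh_lform_wlabs|eapply fresh_lform_nvars]; eauto; mem_tac.
  apply in_map_iff in HLR as ([Lq Rq] & E & HLq). injection E as <- <-.
  apply der_rename; [eapply fresh_wlabs|eapply fresh_nvars|]; eauto; incl_tac.
Qed.


Lemma der_invL_perm G D : der l m G D -> forall P G1, Permutation G (P :: G1) -> logicalL P ->
  forall y k Lp Rp, In (Lp, Rp) (premsL P y k) -> der l m (Lp ++ G1) (Rp ++ D).
Proof.
  induction 1 as [Lc Rc NL NR Ps ew en G0 D0 G D Hr HG HD HNL HNR Hf Hp IH].
  intros P G1 HPG HP y k.
  destruct (in_dec lform_eq_dec P G0) as [HPG0|HPG0].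
  - destruct (Permutation_split P G0 HPG0) as [G2 HG2].
    assert (HG1 : Permutation G1 (Lc ++ G2)).
    { apply (Permutation_cons_inv (a := P)). rewrite <- HPG, HG, HG2. perm. }
    (* invert with labels that the last rule does not use, then rename them *)
    set (BL := G ++ D ++ eigen_lforms ew en).
    set (y' := new_wlab BL). set (k' := new_nvar BL).
    apply (der_premsL_eigen P y' k'); [new_label_fresh|new_label_fresh|].
    intros Lq Rq HLq.
    destruct (eigen_lforms_fresh ew en y' k') as [Hy' Hk']; [new_label_fresh|new_label_fresh|].
    apply der_perm with (Lc ++ Lq ++ G2) (Rc ++ Rq ++ D0);
      [|rewrite HG1; perm|rewrite HD; perm].
    eapply der_rule with (G0 := Lq ++ G2) (D0 := Rq ++ D0); [exact Hr|reflexivity|reflexivity|..].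
    + intros z Hz. pose proof (Permutation_in _ HG2 (HNL z Hz)) as [<-|Hz2].
      * exfalso. eapply rule_NL_not_logicalL; eauto.
      * apply in_or_app. right. exact Hz2.
    + apply incl_appr, HNR.
    + eapply eigen_fresh_incl;
        [|apply eigen_fresh_app; [apply (eigen_fresh_premsL _ _ _ _ _ _ _ HLq)|exact Hf]];
        [incl_tac| |exact Hy'|exact Hk'].
      eapply eigen_fresh_incl; [|exact Hf]. incl_tac.
    + intros Lp Rp HLp.
      apply der_perm with (Lq ++ Lp ++ G2) (Rq ++ Rp ++ D0); [|perm|perm].
      apply (IH Lp Rp HLp P (Lp ++ G2) ltac:(rewrite HG2; perm) HP y' k' Lq Rq HLq).
  - assert (HPLc : In P Lc).
    { destruct (in_app_or Lc G0 P) as [?|?]; [|assumption|contradiction].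
      apply (Permutation_in _ HG), (Permutation_in _ (Permutation_sym HPG)). now left. }
    destruct (rule_Lc_shape _ _ _ _ _ _ _ _ _ P Hr HPLc)
      as [-> [(HnP & _)|(_ & -> & -> & -> & y0 & k0 & -> & -> & ->)]]; [contradiction|].
    assert (HG01 : Permutation G0 G1) by (apply (Permutation_cons_inv (a := P)); rewrite <- HG, HPG; reflexivity).
    apply (der_premsL_eigen P y0 k0).
    + eapply fresh_wlabs; [|apply (proj1 Hf y0 eq_refl)]. incl_tac.
    + eapply fresh_nvars; [|apply (proj2 Hf k0 eq_refl)]. incl_tac.
    + intros Lq Rq HLq. apply der_perm with (Lq ++ G0) (Rq ++ D0); [exact (Hp Lq Rq HLq)| |].
      * apply Permutation_app_head, HG01.
      * apply Permutation_app_head. symmetry. exact HD.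
Qed.

Lemma der_invR_perm G D : der l m G D -> forall P D1, Permutation D (P :: D1) -> logicalR P ->
  forall y k Lp Rp, In (Lp, Rp) (premsR P y k) -> der l m (Lp ++ G) (Rp ++ D1).
Proof.
  induction 1 as [Lc Rc NL NR Ps ew en G0 D0 G D Hr HG HD HNL HNR Hf Hp IH].
  intros P D1 HPD HP y k.
  destruct (in_dec lform_eq_dec P D0) as [HPD0|HPD0].
  - destruct (Permutation_split P D0 HPD0) as [D2 HD2].
    assert (HD1 : Permutation D1 (Rc ++ D2)).
    { apply (Permutation_cons_inv (a := P)). rewrite <- HPD, HD, HD2. perm. }
    set (BL := G ++ D ++ eigen_lforms ew en).
    set (y' := new_wlab BL). set (k' := new_nvar BL).
    apply (der_premsR_eigen P y' k'); [new_label_fresh|new_label_fresh|].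
    intros Lq Rq HLq.
    destruct (eigen_lforms_fresh ew en y' k') as [Hy' Hk']; [new_label_fresh|new_label_fresh|].
    apply der_perm with (Lc ++ Lq ++ G0) (Rc ++ Rq ++ D2);
      [|rewrite HG; perm|rewrite HD1; perm].
    eapply der_rule with (G0 := Lq ++ G0) (D0 := Rq ++ D2); [exact Hr|reflexivity|reflexivity|..].
    + apply incl_appr, HNL.
    + intros z Hz. pose proof (Permutation_in _ HD2 (HNR z Hz)) as [<-|Hz2].
      * exfalso. eapply rule_NR_not_logicalR; eauto.
      * apply in_or_app. right. exact Hz2.
    + eapply eigen_fresh_incl;
        [|apply eigen_fresh_app; [apply (eigen_fresh_premsR _ _ _ _ _ _ _ HLq)|exact Hf]];
        [incl_tac| |exact Hy'|exact Hk'].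
      eapply eigen_fresh_incl; [|exact Hf]. incl_tac.
    + intros Lp Rp HLp.
      apply der_perm with (Lq ++ Lp ++ G0) (Rq ++ Rp ++ D2); [|perm|perm].
      apply (IH Lp Rp HLp P (Rp ++ D2) ltac:(rewrite HD2; perm) HP y' k' Lq Rq HLq).
  - assert (HPRc : In P Rc).
    { destruct (in_app_or Rc D0 P) as [?|?]; [|assumption|contradiction].
      apply (Permutation_in _ HD), (Permutation_in _ (Permutation_sym HPD)). now left. }
    destruct (rule_Rc_shape _ _ _ _ _ _ _ _ _ P Hr HPRc)
      as [-> [(HnP & _)|(_ & -> & -> & -> & y0 & k0 & -> & -> & ->)]]; [contradiction|].
    assert (HD01 : Permutation D0 D1) by (apply (Permutation_cons_inv (a := P)); rewrite <- HD, HPD; reflexivity).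
    apply (der_premsR_eigen P y0 k0).
    + eapply fresh_wlabs; [|apply (proj1 Hf y0 eq_refl)]. incl_tac.
    + eapply fresh_nvars; [|apply (proj2 Hf k0 eq_refl)]. incl_tac.
    + intros Lq Rq HLq. apply der_perm with (Lq ++ G0) (Rq ++ D0); [exact (Hp Lq Rq HLq)| |].
      * apply Permutation_app_head. symmetry. exact HG.
      * apply Permutation_app_head, HD01.
Qed.

Lemma der_invL P G D y k Lp Rp : der l m (P :: G) D -> logicalL P ->
  In (Lp, Rp) (premsL P y k) -> der l m (Lp ++ G) (Rp ++ D).
Proof. intros H HP. eapply der_invL_perm; eauto. Qed.
Lemma der_invR P G D y k Lp Rp : der l m G (P :: D) -> logicalR P ->
  In (Lp, Rp) (premsR P y k) -> der l m (Lp ++ G) (Rp ++ D).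
Proof. intros H HP. eapply der_invR_perm; eauto. Qed.

Lemma inv_andL x A B G D : der l m (LF x (And A B) :: G) D -> der l m (LF x A :: LF x B :: G) D.
Proof. intro H. exact (der_invL _ _ _ 0 0 [_; _] [] H I (or_introl eq_refl)). Qed.
Lemma inv_orL1 x A B G D : der l m (LF x (Or A B) :: G) D -> der l m (LF x A :: G) D.
Proof. intro H. exact (der_invL _ _ _ 0 0 [_] [] H I (or_introl eq_refl)). Qed.
Lemma inv_orL2 x A B G D : der l m (LF x (Or A B) :: G) D -> der l m (LF x B :: G) D.
Proof. intro H. exact (der_invL _ _ _ 0 0 [_] [] H I (or_intror (or_introl eq_refl))). Qed.
Lemma inv_impL1 x A B G D : der l m (LF x (Imp A B) :: G) D -> der l m G (LF x A :: D).
Proof. intro H. exact (der_invL _ _ _ 0 0 [] [_] H I (or_introl eq_refl)). Qed.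
Lemma inv_impL2 x A B G D : der l m (LF x (Imp A B) :: G) D -> der l m (LF x B :: G) D.
Proof. intro H. exact (der_invL _ _ _ 0 0 [_] [] H I (or_intror (or_introl eq_refl))). Qed.
Lemma inv_andR1 x A B G D : der l m G (LF x (And A B) :: D) -> der l m G (LF x A :: D).
Proof. intro H. exact (der_invR _ _ _ 0 0 [] [_] H I (or_introl eq_refl)). Qed.
Lemma inv_andR2 x A B G D : der l m G (LF x (And A B) :: D) -> der l m G (LF x B :: D).
Proof. intro H. exact (der_invR _ _ _ 0 0 [] [_] H I (or_intror (or_introl eq_refl))). Qed.
Lemma inv_orR x A B G D : der l m G (LF x (Or A B) :: D) -> der l m G (LF x A :: LF x B :: D).
Proof. intro H. exact (der_invR _ _ _ 0 0 [] [_; _] H I (or_introl eq_refl)). Qed.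
Lemma inv_impR x A B G D : der l m G (LF x (Imp A B) :: D) -> der l m (LF x A :: G) (LF x B :: D).
Proof. intro H. exact (der_invR _ _ _ 0 0 [_] [_] H I (or_introl eq_refl)). Qed.
Lemma inv_LEx a A G D z : der l m (Ex a A :: G) D -> der l m (InW z a :: LF z A :: G) D.
Proof. intro H. exact (der_invL _ _ _ z 0 [_; _] [] H I (or_introl eq_refl)). Qed.
Lemma inv_RAll a A G D z : der l m G (All a A :: D) -> der l m (InW z a :: G) (LF z A :: D).
Proof. intro H. exact (der_invR _ _ _ z 0 [_] [_] H I (or_introl eq_refl)). Qed.

Lemma inv_LBar x a A B G D c : der l m (Cnd x a A B :: G) D ->
  der l m (InN c x :: Sub c a :: Ex c A :: All c (Imp A B) :: G) D.
Proof.
  intro H. set (k := new_nvar ((Cnd x a A B :: G) ++ D)).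
  assert (Hk : ~ In k (nvars ((Cnd x a A B :: G) ++ D))) by new_label_fresh.
  pose proof (der_invL _ _ _ 0 k [_; _; _; _] [] H I (or_introl eq_refl)) as H'.
  apply (der_sub_frame _ _ id (upd_n NV (Some k) c) _ [] G D) in H';
    [|reflexivity|intros n Hn; apply upd_n_other; intro E; injection E as ->; apply Hk; mem_tac].
  cbn [map app sub_lform sub_nlab] in H'. rewrite upd_n_eq in H'.
  replace (sub_nlab id (upd_n NV (Some k) c) a) with a in H'; [exact H'|].
  destruct a as [n|y]; [cbn [sub_nlab]|reflexivity].
  rewrite upd_n_other; [reflexivity|]. intro E; injection E as ->. apply Hk. mem_tac.
Qed.

Lemma inv_RCond x A B G D c : der l m G (LF x (Cond A B) :: D) ->
  der l m (InN c x :: Ex c A :: G) (Cnd x c A B :: D).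
Proof.
  intro H. set (k := new_nvar (G ++ LF x (Cond A B) :: D)).
  assert (Hk : ~ In k (nvars (G ++ LF x (Cond A B) :: D))) by new_label_fresh.
  pose proof (der_invR _ _ _ 0 k [_; _] [_] H I (or_introl eq_refl)) as H'.
  apply (der_sub_frame _ _ id (upd_n NV (Some k) c) _ _ G D) in H';
    [|reflexivity|intros n Hn; apply upd_n_other; intro E; injection E as ->; apply Hk;
      rewrite nvars_app in *; mem_tac].
  cbn [map app sub_lform sub_nlab] in H'. rewrite upd_n_eq in H'. exact H'.
Qed.

End Invertibility.

(** * Contraction *)

Lemma premsL_weight P y k L R F : In (L, R) (premsL P y k) -> In F (L ++ R) -> weight F < weight P.
Proof.
  intros H HF. destruct P; try destruct f; simpl in H; repeat destruct H as [H|H]; try contradiction;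
  injection H as <- <-; simpl in HF; repeat destruct HF as [<-|HF]; try contradiction; simpl; lia.
Qed.
Lemma premsR_weight P y k L R F : In (L, R) (premsR P y k) -> In F (L ++ R) -> weight F < weight P.
Proof.
  intros H HF. destruct P; try destruct f; simpl in H; repeat destruct H as [H|H]; try contradiction;
  injection H as <- <-; simpl in HF; repeat destruct HF as [<-|HF]; try contradiction; simpl; lia.
Qed.

Section Contraction.
Variables (l : level) (m : modext).

Definition contractibleL (F : lform) : Prop := forall G D, der l m (F :: F :: G) D -> der l m (F :: G) D.
Definition contractibleR (F : lform) : Prop := forall G D, der l m G (F :: F :: D) -> der l m G (F :: D).

Lemma der_contr_listL L : (forall F, In F L -> contractibleL F) ->
  forall G D, der l m (L ++ L ++ G) D -> der l m (L ++ G) D.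
Proof.
  induction L as [|F L IHL]; intros HC G D H; simpl in *; auto.
  apply der_perm with (L ++ F :: G) D; [|perm|reflexivity].
  apply IHL; [auto|]. apply der_perm with (F :: L ++ L ++ G) D; [|perm|reflexivity].
  apply HC; [now left|]. apply der_perm with (F :: L ++ F :: L ++ G) D; [exact H|perm|reflexivity].
Qed.
Lemma der_contr_listR R : (forall F, In F R -> contractibleR F) ->
  forall G D, der l m G (R ++ R ++ D) -> der l m G (R ++ D).
Proof.
  induction R as [|F R IHR]; intros HC G D H; simpl in *; auto.
  apply der_perm with G (R ++ F :: D); [|reflexivity|perm].
  apply IHR; [auto|]. apply der_perm with G (F :: R ++ R ++ D); [|reflexivity|perm].
  apply HC; [now left|]. apply der_perm with G (F :: R ++ F :: R ++ D); [exact H|reflexivity|perm].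
Qed.

Lemma contractibleL_step F : (forall F', weight F' < weight F -> contractibleL F' /\ contractibleR F') ->
  contractibleL F.
Proof.
  intros IHw G D H. remember (F :: F :: G) as G' eqn:EG'.
  assert (HG' : Permutation G' (F :: F :: G)) by (rewrite EG'; reflexivity). clear EG'.
  revert G HG'.
  induction H as [Lc Rc NL NR Ps ew en G0 D0 G' D Hr HG HD HNL HNR Hf Hp IH].
  intros G HG'. rewrite HG' in HG.
  destruct (in_dec lform_eq_dec F Lc) as [HF|HF].
  - destruct (rule_Lc_shape _ _ _ _ _ _ _ _ _ F Hr HF)
      as [-> [(_ & -> & -> & -> & -> & ->)|(HFl & -> & -> & -> & y0 & k0 & -> & -> & ->)]];
      simpl in HG; apply Permutation_cons_inv in HG.
    + eapply der_rule with (G0 := G); [exact Hr|reflexivity|exact HD|apply incl_nil_l|apply incl_nil_l|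
        apply eigen_fresh_none|intros ? ? []].
    + eapply der_rule with (G0 := G); [exact Hr|reflexivity|exact HD|apply incl_nil_l|apply incl_nil_l|
        eapply eigen_fresh_incl; [|exact Hf]; incl_tac|].
      intros Lp Rp HLp.
      assert (HLp' : der l m (Lp ++ Lp ++ G) (Rp ++ Rp ++ D0)).
      { apply (der_invL_perm l m (Lp ++ G0) (Rp ++ D0) (Hp Lp Rp HLp) F (Lp ++ G)
                ltac:(rewrite <- HG; perm) HFl y0 k0 _ _ HLp). }
      apply der_contr_listR; [intros F' HF'; apply IHw; eapply premsL_weight; eauto; mem_tac|].
      apply der_contr_listL; [intros F' HF'; apply IHw; eapply premsL_weight; eauto; mem_tac|].
      exact HLp'.
  - destruct (Permutation_cons_app_split F Lc (F :: G) G0 HG HF) as (G3 & HG03 & HG3).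
    destruct (Permutation_cons_app_split F Lc G G3 HG3 HF) as (G2 & HG32 & HG2).
    eapply der_rule with (G0 := F :: G2); [exact Hr| |exact HD| |exact HNR| |].
    + rewrite HG2. perm.
    + intros z Hz. apply HNL, (Permutation_in _ HG03) in Hz as [<-|Hz]; [now left|].
      apply (Permutation_in _ HG32) in Hz. exact Hz.
    + eapply eigen_fresh_incl; [|exact Hf]. apply incl_app; [|apply incl_appr, incl_refl].
      intros z Hz. apply in_or_app. left. apply (Permutation_in _ (Permutation_sym HG')). simpl in *. tauto.
    + intros Lp Rp HLp. apply der_perm with (F :: Lp ++ G2) (Rp ++ D0); [|perm|reflexivity].
      apply (IH Lp Rp HLp). rewrite HG03, HG32. perm.
Qed.

Lemma contractibleR_step F : (forall F', weight F' < weight F -> contractibleL F' /\ contractibleR F') ->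
  contractibleR F.
Proof.
  intros IHw G D H. remember (F :: F :: D) as D' eqn:ED'.
  assert (HD' : Permutation D' (F :: F :: D)) by (rewrite ED'; reflexivity). clear ED'.
  revert D HD'.
  induction H as [Lc Rc NL NR Ps ew en G0 D0 G D' Hr HG HD HNL HNR Hf Hp IH].
  intros D HD'. rewrite HD' in HD.
  destruct (in_dec lform_eq_dec F Rc) as [HF|HF].
  - destruct (rule_Rc_shape _ _ _ _ _ _ _ _ _ F Hr HF)
      as [-> [(_ & -> & -> & -> & -> & ->)|(HFl & -> & -> & -> & y0 & k0 & -> & -> & ->)]];
      simpl in HD; apply Permutation_cons_inv in HD.
    + eapply der_rule with (D0 := D); [exact Hr|exact HG|reflexivity|apply incl_nil_l|apply incl_nil_l|
        apply eigen_fresh_none|intros ? ? []].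
    + eapply der_rule with (D0 := D); [exact Hr|exact HG|reflexivity|apply incl_nil_l|apply incl_nil_l|
        eapply eigen_fresh_incl; [|exact Hf]; incl_tac|].
      intros Lp Rp HLp.
      assert (HLp' : der l m (Lp ++ Lp ++ G0) (Rp ++ Rp ++ D)).
      { apply (der_invR_perm l m (Lp ++ G0) (Rp ++ D0) (Hp Lp Rp HLp) F (Rp ++ D)
                ltac:(rewrite <- HD; perm) HFl y0 k0 _ _ HLp). }
      apply der_contr_listR; [intros F' HF'; apply IHw; eapply premsR_weight; eauto; mem_tac|].
      apply der_contr_listL; [intros F' HF'; apply IHw; eapply premsR_weight; eauto; mem_tac|].
      exact HLp'.
  - destruct (Permutation_cons_app_split F Rc (F :: D) D0 HD HF) as (D3 & HD03 & HD3).
    destruct (Permutation_cons_app_split F Rc D D3 HD3 HF) as (D2 & HD32 & HD2).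
    eapply der_rule with (D0 := F :: D2); [exact Hr|exact HG| |exact HNL| | |].
    + rewrite HD2. perm.
    + intros z Hz. apply HNR, (Permutation_in _ HD03) in Hz as [<-|Hz]; [now left|].
      apply (Permutation_in _ HD32) in Hz. exact Hz.
    + eapply eigen_fresh_incl; [|exact Hf]. apply incl_app; [apply incl_appl, incl_refl|].
      intros z Hz. apply in_or_app. right. apply (Permutation_in _ (Permutation_sym HD')). simpl in *. tauto.
    + intros Lp Rp HLp. apply der_perm with (Lp ++ G0) (F :: Rp ++ D2); [|reflexivity|perm].
      apply (IH Lp Rp HLp). rewrite HD03, HD32. perm.
Qed.

Theorem contractible F : contractibleL F /\ contractibleR F.
Proof.
  induction F as [F IH] using (well_founded_induction (Wf_nat.well_founded_ltof _ weight)).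
  split; [apply contractibleL_step|apply contractibleR_step]; exact IH.
Qed.

Corollary der_contrL F G D : der l m (F :: F :: G) D -> der l m (F :: G) D.
Proof. apply contractible. Qed.
Corollary der_contrR F G D : der l m G (F :: F :: D) -> der l m G (F :: D).
Proof. apply contractible. Qed.

Lemma der_contr_inL F G D : In F G -> der l m (F :: G) D -> der l m G D.
Proof.
  intros HF H. destruct (Permutation_split F G HF) as [G1 HG1].
  apply der_perm with (F :: G1) D; [|symmetry; exact HG1|reflexivity].
  apply der_contrL. apply der_perm with (F :: G) D; [exact H|rewrite HG1; reflexivity|reflexivity].
Qed.
Lemma der_contr_inR F G D : In F D -> der l m G (F :: D) -> der l m G D.
Proof.
  intros HF H. destruct (Permutation_split F D HF) as [D1 HD1].
  apply der_perm with G (F :: D1); [|reflexivity|symmetry; exact HD1].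
  apply der_contrR. apply der_perm with G (F :: D); [exact H|reflexivity|rewrite HD1; reflexivity].
Qed.

End Contraction.

(** * Cut *)

Section Cut.
Variables (l : level) (m : modext).

Lemma der_rule_inv Lc Rc NL NR Ps ew en X Y G0 D0 Lp Rp :
  rule l m Lc Rc NL NR Ps ew en -> In (Lp, Rp) Ps ->
  der l m (X ++ Lc ++ G0) (Y ++ Rc ++ D0) -> der l m (X ++ Lp ++ G0) (Y ++ Rp ++ D0).
Proof.
  intros Hr HP H. destruct Lc as [|F Lc']; [destruct Rc as [|F Rc']|].
  - apply der_perm with ((X ++ G0) ++ Lp) ((Y ++ D0) ++ Rp); [apply der_weaken, H|perm|perm].
  - destruct (rule_Rc_shape _ _ _ _ _ _ _ _ _ F Hr (or_introl eq_refl))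
      as [E [(_ & -> & _)|(HF & _ & _ & _ & y0 & k0 & -> & _)]]; [destruct HP|injection E as ->].
    apply der_perm with (Lp ++ X ++ G0) (Rp ++ Y ++ D0); [|perm|perm].
    apply (der_invR_perm l m _ _ H F (Y ++ D0) ltac:(perm) HF y0 k0 _ _ HP).
  - destruct (rule_Lc_shape _ _ _ _ _ _ _ _ _ F Hr (or_introl eq_refl))
      as [E [(_ & -> & _)|(HF & -> & _ & _ & y0 & k0 & -> & _)]]; [destruct HP|injection E as ->].
    apply der_perm with (Lp ++ X ++ G0) (Rp ++ Y ++ D0); [|perm|perm].
    apply (der_invL_perm l m _ _ H F (X ++ G0) ltac:(perm) HF y0 k0 _ _ HP).
Qed.

Lemma rule_NR_shape Lc Rc NL NR Ps ew en F :
  rule l m Lc Rc NL NR Ps ew en -> In F NR -> Lc = [] /\ Rc = [].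
Proof. intros H HF. destruct H; simpl in HF; try contradiction; auto. Qed.
Lemma rule_NL_shape Lc Rc NL NR Ps ew en F :
  rule l m Lc Rc NL NR Ps ew en -> In F NL -> Lc = [] /\ Rc = [].
Proof. intros H HF. destruct H; simpl in HF; try contradiction; auto. Qed.

Lemma der_strengthenR F :
  (forall Lc Rc NL NR Ps ew en, rule l m Lc Rc NL NR Ps ew en -> ~ In F Rc /\ ~ In F NR) ->
  forall G D, der l m G (F :: D) -> der l m G D.
Proof.
  intros HF G D H. remember (F :: D) as D' eqn:ED'.
  assert (HD' : Permutation D' (F :: D)) by (rewrite ED'; reflexivity). clear ED'.
  revert D HD'.
  induction H as [Lc Rc NL NR Ps ew en G0 D0 G D' Hr HG HD HNL HNR Hf Hp IH].
  intros D HD'. rewrite HD' in HD. destruct (HF _ _ _ _ _ _ _ Hr) as [HRc HNR'].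
  destruct (Permutation_cons_app_split F Rc D D0 HD HRc) as (D2 & HD02 & HD2).
  eapply der_rule with (D0 := D2); [exact Hr|exact HG|exact HD2|exact HNL| | |].
  - intros z Hz. pose proof (Permutation_in _ HD02 (HNR z Hz)) as [<-|Hz2]; tauto.
  - eapply eigen_fresh_incl; [|exact Hf]. apply incl_app; [apply incl_appl, incl_refl|].
    intros z Hz. apply in_or_app. right. apply (Permutation_in _ (Permutation_sym HD')). now right.
  - intros Lp Rp HLp. apply (IH Lp Rp HLp). rewrite HD02. perm.
Qed.

(* Cut by induction on the left premiss, for cut formulas that the rules only
   keep in the succedent, apart from initial sequents. *)
Lemma cut_induct_R F :
  (forall Lc Rc NL NR Ps ew en, rule l m Lc Rc NL NR Ps ew en -> In F Rc -> In F Lc) ->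
  (forall NL NR Ps ew en G0 D, rule l m [] [] NL NR Ps ew en -> In F NR -> incl NL G0 -> incl NR (F :: D) ->
     (forall Lp Rp, In (Lp, Rp) Ps -> der l m (Lp ++ G0) (Rp ++ D)) ->
     der l m (F :: G0) D -> der l m G0 D) ->
  forall G D, der l m G (F :: D) -> der l m (F :: G) D -> der l m G D.
Proof.
  intros HRc Hside G D H. remember (F :: D) as D' eqn:ED'.
  assert (HD' : Permutation D' (F :: D)) by (rewrite ED'; reflexivity). clear ED'.
  revert D HD'.
  induction H as [Lc Rc NL NR Ps ew en G0 D0 G D' Hr HG HD HNL HNR Hf Hp IH].
  intros D HD' HFG. rewrite HD' in HD.
  destruct (in_dec lform_eq_dec F Rc) as [HFR|HFR].
  { apply (der_contr_inL l m F); [|exact HFG].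
    apply (Permutation_in _ (Permutation_sym HG)), in_or_app. left. eauto. }
  destruct (Permutation_cons_app_split F Rc D D0 HD HFR) as (D2 & HD02 & HD2).
  assert (HFG' : der l m (F :: Lc ++ G0) (Rc ++ D2))
    by (apply der_perm with (F :: G) D; [exact HFG|rewrite HG; reflexivity|exact HD2]).
  destruct (in_dec lform_eq_dec F NR) as [HFN|HFN].
  - destruct (rule_NR_shape _ _ _ _ _ _ _ F Hr HFN) as [-> ->]. simpl in HG, HD2, HFG'.
    apply der_perm with G0 D2; [|symmetry; exact HG|symmetry; exact HD2].
    apply (Hside NL NR Ps ew en G0 D2 Hr HFN HNL); [|intros Lp Rp HLp|exact HFG'].
    + intros z Hz. apply (Permutation_in _ HD02), HNR, Hz.
    + apply (IH Lp Rp HLp (Rp ++ D2)); [rewrite HD02; perm|].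
      apply der_perm with ((F :: G0) ++ Lp) (D2 ++ Rp); [apply der_weaken, HFG'|perm|perm].
  - eapply der_rule with (D0 := D2); [exact Hr|exact HG|exact HD2|exact HNL| | |].
    + intros z Hz. pose proof (Permutation_in _ HD02 (HNR z Hz)) as [<-|Hz2]; tauto.
    + eapply eigen_fresh_incl; [|exact Hf]. apply incl_app; [apply incl_appl, incl_refl|].
      intros z Hz. apply in_or_app. right. apply (Permutation_in _ (Permutation_sym HD')). now right.
    + intros Lp Rp HLp. apply (IH Lp Rp HLp (Rp ++ D2)); [rewrite HD02; perm|].
      exact (der_rule_inv _ _ _ _ _ _ _ [F] [] G0 D2 _ _ Hr HLp HFG').
Qed.

Lemma cut_induct_L F :
  (forall Lc Rc NL NR Ps ew en, rule l m Lc Rc NL NR Ps ew en -> ~ In F Lc) ->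
  (forall NL NR Ps ew en G D0, rule l m [] [] NL NR Ps ew en -> In F NL -> incl NL (F :: G) -> incl NR D0 ->
     (forall Lp Rp, In (Lp, Rp) Ps -> der l m (Lp ++ G) (Rp ++ D0)) ->
     der l m G (F :: D0) -> der l m G D0) ->
  forall G D, der l m (F :: G) D -> der l m G (F :: D) -> der l m G D.
Proof.
  intros HLc Hside G D H. remember (F :: G) as G' eqn:EG'.
  assert (HG' : Permutation G' (F :: G)) by (rewrite EG'; reflexivity). clear EG'.
  revert G HG'.
  induction H as [Lc Rc NL NR Ps ew en G0 D0 G' D Hr HG HD HNL HNR Hf Hp IH].
  intros G HG' HFD. rewrite HG' in HG.
  destruct (Permutation_cons_app_split F Lc G G0 HG (HLc _ _ _ _ _ _ _ Hr)) as (G2 & HG02 & HG2).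
  assert (HFD' : der l m (Lc ++ G2) (F :: Rc ++ D0))
    by (apply der_perm with G (F :: D); [exact HFD|exact HG2|rewrite HD; reflexivity]).
  destruct (in_dec lform_eq_dec F NL) as [HFN|HFN].
  - destruct (rule_NL_shape _ _ _ _ _ _ _ F Hr HFN) as [-> ->]. simpl in HD, HG2, HFD'.
    apply der_perm with G2 D0; [|symmetry; exact HG2|symmetry; exact HD].
    apply (Hside NL NR Ps ew en G2 D0 Hr HFN); [|exact HNR|intros Lp Rp HLp|exact HFD'].
    + intros z Hz. apply (Permutation_in _ HG02), HNL, Hz.
    + apply (IH Lp Rp HLp (Lp ++ G2)); [rewrite HG02; perm|].
      apply der_perm with (G2 ++ Lp) ((F :: D0) ++ Rp); [apply der_weaken, HFD'|perm|perm].
  - eapply der_rule with (G0 := G2); [exact Hr|exact HG2|exact HD| |exact HNR| |].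
    + intros z Hz. pose proof (Permutation_in _ HG02 (HNL z Hz)) as [<-|Hz2]; tauto.
    + eapply eigen_fresh_incl; [|exact Hf]. apply incl_app; [|apply incl_appr, incl_refl].
      intros z Hz. apply in_or_app. left. apply (Permutation_in _ (Permutation_sym HG')). now right.
    + intros Lp Rp HLp. apply (IH Lp Rp HLp (Lp ++ G2)); [rewrite HG02; perm|].
      exact (der_rule_inv _ _ _ _ _ _ _ [] [F] G2 D0 _ _ Hr HLp HFD').
Qed.

Ltac side_inv := intros H HIn; inversion H; subst; simpl in HIn;
  repeat (let E := fresh "E" in destruct HIn as [E|HIn];
    [try discriminate E; try (match goal with t : atomT |- _ => destruct t; discriminate E end);
     injection E; intros; subst; eexists; split; reflexivity|]);
  contradiction.
Lemma rule_side_Cond NL NR Ps ew en y A B : rule l m [] [] NL NR Ps ew en -> In (LF y (Cond A B)) NL ->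
  exists a, NL = [InN a y; LF y (Cond A B)] /\ Ps = [([], [Ex a A]); ([Cnd y a A B], [])].
Proof. side_inv. Qed.
Lemma rule_side_Ex NL NR Ps ew en a A : rule l m [] [] NL NR Ps ew en -> In (Ex a A) NR ->
  exists x, NL = [InW x a] /\ Ps = [([], [LF x A])].
Proof. side_inv. Qed.
Lemma rule_side_All NL NR Ps ew en a A : rule l m [] [] NL NR Ps ew en -> In (All a A) NL ->
  exists x, NL = [InW x a; All a A] /\ Ps = [([LF x A], [])].
Proof. side_inv. Qed.
Lemma rule_side_Cnd NL NR Ps ew en y b A B : rule l m [] [] NL NR Ps ew en -> In (Cnd y b A B) NR ->
  exists c, NL = [InN c y; Sub c b] /\ Ps = [([], [Ex c A]); ([], [All c (Imp A B)])].
Proof. side_inv. Qed.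

Definition cut_admissible (F : lform) : Prop :=
  forall G D, der l m G (F :: D) -> der l m (F :: G) D -> der l m G D.

Lemma rule_right_uses Lc Rc NL NR Ps ew en F : rule l m Lc Rc NL NR Ps ew en -> In F (Rc ++ NR) ->
  match F with InN _ _ | InW _ _ | Sub _ _ | LF _ Bot => False | _ => True end.
Proof.
  intros H HF. destruct H; simpl in HF; repeat destruct HF as [<-|HF]; simpl; auto; try contradiction.
  destruct P as [| | |? []| | |]; auto.
Qed.

Lemma cut_unused_right F : match F with InN _ _ | InW _ _ | Sub _ _ | LF _ Bot => True | _ => False end ->
  cut_admissible F.
Proof.
  intros HF G D H _. apply (der_strengthenR F); [|exact H].
  intros Lc Rc NL NR Ps ew en Hr. split; intro HIn;
    [pose proof (rule_right_uses _ _ _ _ _ _ _ F Hr (in_or_app _ _ _ (or_introl HIn))) as HU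
    |pose proof (rule_right_uses _ _ _ _ _ _ _ F Hr (in_or_app _ _ _ (or_intror HIn))) as HU];
    destruct F as [| | |? []| | |]; auto.
Qed.

Definition cut_below (F : lform) : Prop := forall F', weight F' < weight F -> cut_admissible F'.

Ltac principal_cases :=
  let Hr := fresh "Hr" in let HIn := fresh "HIn" in
  intros ? ? ? ? ? ? ? Hr HIn; destruct Hr; simpl in HIn;
  repeat (let E := fresh "E" in
          destruct HIn as [E|HIn]; try discriminate E; try injection E as <- <-; subst);
  simpl in *; auto; contradiction.

Lemma cut_Var y p : cut_admissible (LF y (Var p)).
Proof.
  intros G D. apply cut_induct_R.
  - principal_cases.
  - intros NL NR Ps ew en G0 D0 Hr HIn. exfalso. inversion Hr; subst; simpl in HIn;
      repeat destruct HIn as [HIn|HIn]; try discriminate; contradiction.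
Qed.

Lemma cut_And y A B : cut_below (LF y (And A B)) -> cut_admissible (LF y (And A B)).
Proof.
  intros IHc G D H1 H2.
  apply (IHc (LF y A)); [simpl; lia|apply (inv_andR1 l m _ _ _ _ _ H1)|].
  apply (IHc (LF y B)); [simpl; lia| |].
  2: apply der_perm with (LF y A :: LF y B :: G) D; [apply (inv_andL l m _ _ _ _ _ H2)|perm|reflexivity].
  apply der_perm with (G ++ [LF y A]) ((LF y B :: D) ++ []);
    [apply der_weaken, (inv_andR2 l m _ _ _ _ _ H1)|perm|perm].
Qed.

Lemma cut_Or y A B : cut_below (LF y (Or A B)) -> cut_admissible (LF y (Or A B)).
Proof.
  intros IHc G D H1 H2.
  apply (IHc (LF y B)); [simpl; lia| |apply (inv_orL2 l m _ _ _ _ _ H2)].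
  apply (IHc (LF y A)); [simpl; lia|apply (inv_orR l m _ _ _ _ _ H1)|].
  apply der_perm with ((LF y A :: G) ++ []) (D ++ [LF y B]);
    [apply der_weaken, (inv_orL1 l m _ _ _ _ _ H2)|perm|perm].
Qed.

Lemma cut_Imp y A B : cut_below (LF y (Imp A B)) -> cut_admissible (LF y (Imp A B)).
Proof.
  intros IHc G D H1 H2.
  apply (IHc (LF y A)); [simpl; lia|apply (inv_impL1 l m _ _ _ _ _ H2)|].
  apply (IHc (LF y B)); [simpl; lia|apply (inv_impR l m _ _ _ _ _ H1)|].
  apply der_perm with ((LF y B :: G) ++ [LF y A]) (D ++ []);
    [apply der_weaken, (inv_impL2 l m _ _ _ _ _ H2)|perm|perm].
Qed.

Lemma cut_Cond y A B : cut_below (LF y (Cond A B)) -> cut_admissible (LF y (Cond A B)).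
Proof.
  intros IHc G D H1 H2. apply (cut_induct_L (LF y (Cond A B))); [|clear G D H1 H2|exact H2|exact H1].
  { principal_cases. }
  intros NL NR Ps ew en G D Hr HIn HNL HNR Hp H.
  destruct (rule_side_Cond _ _ _ _ _ _ _ _ Hr HIn) as (a & -> & ->).
  assert (HaG : In (InN a y) G) by (destruct (HNL (InN a y)) as [E|E]; [now left|discriminate|exact E]).
  pose proof (Hp [] [Ex a A] (or_introl eq_refl)) as Hex.
  pose proof (Hp [Cnd y a A B] [] (or_intror (or_introl eq_refl))) as Hcnd.
  apply (der_contr_inL l m (InN a y)); [exact HaG|].
  apply (IHc (Ex a A)); [simpl; lia| |].
  - apply der_perm with (G ++ [InN a y]) ((Ex a A :: D) ++ []); [apply der_weaken, Hex|perm|perm].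
  - apply der_perm with (InN a y :: Ex a A :: G) D; [|perm|reflexivity].
    apply (IHc (Cnd y a A B)); [simpl; lia|apply inv_RCond, H|].
    apply der_perm with ((Cnd y a A B :: G) ++ [InN a y; Ex a A]) (D ++ []);
      [apply der_weaken, Hcnd|perm|perm].
Qed.

Lemma cut_Ex a A : cut_below (Ex a A) -> cut_admissible (Ex a A).
Proof.
  intros IHc G D H1 H2. apply (cut_induct_R (Ex a A)); [|clear G D H1 H2|exact H1|exact H2].
  { principal_cases. }
  intros NL NR Ps ew en G D Hr HIn HNL HNR Hp H.
  destruct (rule_side_Ex _ _ _ _ _ _ _ Hr HIn) as (x & -> & ->).
  pose proof (Hp [] [LF x A] (or_introl eq_refl)) as HA.
  apply (der_contr_inL l m (InW x a)); [apply HNL; now left|].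
  apply (IHc (LF x A)); [simpl; lia| |].
  - apply der_perm with (G ++ [InW x a]) ((LF x A :: D) ++ []); [apply der_weaken, HA|perm|perm].
  - apply der_perm with (InW x a :: LF x A :: G) D; [apply inv_LEx, H|perm|reflexivity].
Qed.

Lemma cut_All a A : cut_below (All a A) -> cut_admissible (All a A).
Proof.
  intros IHc G D H1 H2. apply (cut_induct_L (All a A)); [|clear G D H1 H2|exact H2|exact H1].
  { principal_cases. }
  intros NL NR Ps ew en G D Hr HIn HNL HNR Hp H.
  destruct (rule_side_All _ _ _ _ _ _ _ Hr HIn) as (x & -> & ->).
  assert (HxG : In (InW x a) G) by (destruct (HNL (InW x a)) as [E|E]; [now left|discriminate|exact E]).
  pose proof (Hp [LF x A] [] (or_introl eq_refl)) as HA.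
  apply (der_contr_inL l m (InW x a)); [exact HxG|].
  apply (IHc (LF x A)); [simpl; lia|apply inv_RAll, H|].
  apply der_perm with ((LF x A :: G) ++ [InW x a]) (D ++ []); [apply der_weaken, HA|perm|perm].
Qed.

Lemma cut_Cnd y b A B : cut_below (Cnd y b A B) -> cut_admissible (Cnd y b A B).
Proof.
  intros IHc G D H1 H2. apply (cut_induct_R (Cnd y b A B)); [|clear G D H1 H2|exact H1|exact H2].
  { principal_cases. }
  intros NL NR Ps ew en G D Hr HIn HNL HNR Hp H.
  destruct (rule_side_Cnd _ _ _ _ _ _ _ _ _ Hr HIn) as (c & -> & ->).
  pose proof (Hp [] [Ex c A] (or_introl eq_refl)) as Hex.
  pose proof (Hp [] [All c (Imp A B)] (or_intror (or_introl eq_refl))) as Hall.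
  apply (der_contr_inL l m (InN c y)); [apply HNL; now left|].
  apply (der_contr_inL l m (Sub c b)); [right; apply HNL; right; now left|].
  apply (IHc (Ex c A)); [simpl; lia| |].
  - apply der_perm with (G ++ [InN c y; Sub c b]) ((Ex c A :: D) ++ []); [apply der_weaken, Hex|perm|perm].
  - apply der_perm with (InN c y :: Sub c b :: Ex c A :: G) D; [|perm|reflexivity].
    apply (IHc (All c (Imp A B))); [simpl; lia| |].
    2: apply der_perm with (InN c y :: Sub c b :: Ex c A :: All c (Imp A B) :: G) D;
         [apply inv_LBar, H|perm|reflexivity].
    apply der_perm with (G ++ [InN c y; Sub c b; Ex c A]) ((All c (Imp A B) :: D) ++ []);
      [apply der_weaken, Hall|perm|perm].
Qed.

Lemma cut_admissible_step F : cut_below F -> cut_admissible F.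
Proof.
  intro IH. destruct F as [a y|y a|a b|y [p| |A B|A B|A B|A B]|a A|a A|y a A B];
    first [apply cut_unused_right; exact I | apply cut_Var | apply cut_And, IH | apply cut_Or, IH
          | apply cut_Imp, IH | apply cut_Cond, IH | apply cut_Ex, IH | apply cut_All, IH
          | apply cut_Cnd, IH].
Qed.

Theorem der_cut F : cut_admissible F.
Proof.
  induction F as [F IH] using (well_founded_induction (Wf_nat.well_founded_ltof _ weight)).
  apply cut_admissible_step. exact IH.
Qed.

End Cut.

(** * Identity *)

Section Identity.
Variables (l : level) (m : modext).

Lemma der_andL_in x A B G D : In (LF x (And A B)) G ->
  der l m (LF x A :: LF x B :: G) D -> der l m G D.
Proof. intros HF H. apply (der_contr_inL l m _ _ _ HF), der_andL, H. Qed.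
Lemma der_orL_in x A B G D : In (LF x (Or A B)) G ->
  der l m (LF x A :: G) D -> der l m (LF x B :: G) D -> der l m G D.
Proof. intros HF H1 H2. apply (der_contr_inL l m _ _ _ HF), der_orL; assumption. Qed.
Lemma der_impL_in x A B G D : In (LF x (Imp A B)) G ->
  der l m G (LF x A :: D) -> der l m (LF x B :: G) D -> der l m G D.
Proof. intros HF H1 H2. apply (der_contr_inL l m _ _ _ HF), der_impL; assumption. Qed.
Lemma der_andR_in x A B G D : In (LF x (And A B)) D ->
  der l m G (LF x A :: D) -> der l m G (LF x B :: D) -> der l m G D.
Proof. intros HF H1 H2. apply (der_contr_inR l m _ _ _ HF), der_andR; assumption. Qed.
Lemma der_orR_in x A B G D : In (LF x (Or A B)) D ->
  der l m G (LF x A :: LF x B :: D) -> der l m G D.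
Proof. intros HF H. apply (der_contr_inR l m _ _ _ HF), der_orR, H. Qed.
Lemma der_impR_in x A B G D : In (LF x (Imp A B)) D ->
  der l m (LF x A :: G) (LF x B :: D) -> der l m G D.
Proof. intros HF H. apply (der_contr_inR l m _ _ _ HF), der_impR, H. Qed.

Lemma der_LEx_in y a A G D : In (Ex a A) G -> ~ In y (wlabs (G ++ D)) ->
  der l m (InW y a :: LF y A :: G) D -> der l m G D.
Proof.
  intros HF Hy H. apply (der_contr_inL l m _ _ _ HF), (der_LEx l m y); [|exact H].
  eapply fresh_wlabs; [|exact Hy]. incl_tac.
Qed.
Lemma der_LBar_in n x a A B G D : In (Cnd x a A B) G -> ~ In n (nvars (G ++ D)) ->
  der l m (InN (NV n) x :: Sub (NV n) a :: Ex (NV n) A :: All (NV n) (Imp A B) :: G) D -> der l m G D.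
Proof.
  intros HF Hn H. apply (der_contr_inL l m _ _ _ HF), (der_LBar l m n); [|exact H].
  eapply fresh_nvars; [|exact Hn]. incl_tac.
Qed.
Lemma der_RCond_in n x A B G D : In (LF x (Cond A B)) D -> ~ In n (nvars (G ++ D)) ->
  der l m (InN (NV n) x :: Ex (NV n) A :: G) (Cnd x (NV n) A B :: D) -> der l m G D.
Proof.
  intros HF Hn H. apply (der_contr_inR l m _ _ _ HF), (der_RCond l m n); [|exact H].
  eapply fresh_nvars; [|exact Hn]. incl_tac.
Qed.
Lemma der_RAll_in y a A G D : In (All a A) D -> ~ In y (wlabs (G ++ D)) ->
  der l m (InW y a :: G) (LF y A :: D) -> der l m G D.
Proof.
  intros HF Hy H. apply (der_contr_inR l m _ _ _ HF), (der_RAll l m y); [|exact H].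
  eapply fresh_wlabs; [|exact Hy]. incl_tac.
Qed.

Lemma der_init_in x p G D : In (LF x (Var p)) G -> In (LF x (Var p)) D -> der l m G D.
Proof.
  intros HG HD. destruct (Permutation_split _ G HG) as [G1 HG1]. destruct (Permutation_split _ D HD) as [D1 HD1].
  apply der_perm with (LF x (Var p) :: G1) (LF x (Var p) :: D1);
    [apply der_init|symmetry; exact HG1|symmetry; exact HD1].
Qed.
Lemma der_botL_in x G D : In (LF x Bot) G -> der l m G D.
Proof. intros HF. apply (der_contr_inL l m _ _ _ HF), der_botL. Qed.

Definition closes_id (A : form) : Prop :=
  forall x G D, In (LF x A) G -> In (LF x A) D -> der l m G D.

Lemma closes_id_Ex A : closes_id A -> forall a G D, In (Ex a A) G -> In (Ex a A) D -> der l m G D.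
Proof.
  intros HA a G D H1 H2. set (y := new_wlab (G ++ D)).
  apply (der_LEx_in y a A G D H1); [new_label_fresh|].
  apply (der_REx l m y a A); [now left|exact H2|]. apply (HA y); mem_tac.
Qed.
Lemma closes_id_All A : closes_id A -> forall a G D, In (All a A) G -> In (All a A) D -> der l m G D.
Proof.
  intros HA a G D H1 H2. set (y := new_wlab (G ++ D)).
  apply (der_RAll_in y a A G D H2); [new_label_fresh|].
  apply (der_LAll l m y a A); [now left|now right|]. apply (HA y); mem_tac.
Qed.
Lemma closes_id_Imp A B : closes_id A -> closes_id B -> closes_id (Imp A B).
Proof.
  intros HA HB x G D H1 H2. apply (der_impR_in x A B G D H2). apply (der_impL_in x A B); [now right| |].
  - apply (HA x); mem_tac.
  - apply (HB x); mem_tac.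
Qed.
Lemma closes_id_Cnd A B : closes_id A -> closes_id B ->
  forall x a G D, In (Cnd x a A B) G -> In (Cnd x a A B) D -> der l m G D.
Proof.
  intros HA HB x a G D H1 H2. set (n := new_nvar (G ++ D)).
  apply (der_LBar_in n x a A B G D H1); [new_label_fresh|].
  apply (der_RBar l m (NV n) a x A B); [mem_tac|mem_tac|exact H2| |].
  - apply (closes_id_Ex A HA (NV n)); mem_tac.
  - apply (closes_id_All (Imp A B) (closes_id_Imp A B HA HB) (NV n)); mem_tac.
Qed.

Theorem der_id A : closes_id A.
Proof.
  induction A as [p| |A IHA B IHB|A IHA B IHB|A IHA B IHB|A IHA B IHB]; intros x G D H1 H2.
  - eapply der_init_in; eauto.
  - eapply der_botL_in; eauto.
  - apply (der_andL_in x A B G D H1), (der_andR_in x A B); auto; [apply (IHA x)|apply (IHB x)]; mem_tac.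
  - apply (der_orR_in x A B G D H2), (der_orL_in x A B); auto; [apply (IHA x)|apply (IHB x)]; mem_tac.
  - apply (closes_id_Imp A B IHA IHB x); auto.
  - set (n := new_nvar (G ++ D)).
    apply (der_RCond_in n x A B G D H2); [new_label_fresh|].
    apply (der_LCond l m (NV n) x A B); [now left|now right; right| |].
    + apply (closes_id_Ex A IHA (NV n)); mem_tac.
    + apply (closes_id_Cnd A B IHA IHB x (NV n)); mem_tac.
Qed.

End Identity.

(** * Propositional tautologies *)

Definition bvalid (Ls Rs : list form) : Prop :=
  forall v, (forall A, In A Ls -> beval v A = true) -> exists B, In B Rs /\ beval v B = true.

Definition compound (A : form) : bool :=
  match A with And _ _ | Or _ _ | Imp _ _ => true | _ => false end.

Definition fsizes (L : list form) : nat := list_sum (map fsize L).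

Lemma fsizes_perm L L' : Permutation L L' -> fsizes L = fsizes L'.
Proof. induction 1; unfold fsizes in *; simpl in *; lia. Qed.

Lemma bvalid_perm Ls Rs Ls' Rs' : Permutation Ls Ls' -> Permutation Rs Rs' ->
  bvalid Ls Rs -> bvalid Ls' Rs'.
Proof.
  intros HL HR H v Hv. destruct (H v) as (B & HB & HvB).
  - intros A HA. apply Hv, (Permutation_in _ HL), HA.
  - exists B. split; [apply (Permutation_in _ HR), HB|exact HvB].
Qed.

(* In a valid sequent of atoms (variables, conditionals, ⊥), either ⊥ is on
   the left or some atom is on both sides: otherwise the valuation making
   exactly the left atoms true refutes it. *)
Lemma bvalid_atomic Ls Rs : (forall A, In A (Ls ++ Rs) -> compound A = false) -> bvalid Ls Rs ->
  In Bot Ls \/ exists A, In A Ls /\ In A Rs.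
Proof.
  intros Hat H. destruct (in_dec form_eq_dec Bot Ls) as [HB|HB]; [now left|right].
  set (v := fun F => if in_dec form_eq_dec F Ls then true else false).
  destruct (H v) as (B & HBR & HvB).
  - intros A HA. specialize (Hat A (in_or_app _ _ _ (or_introl HA))).
    destruct A; simpl in *; try discriminate; unfold v;
      try (destruct (in_dec form_eq_dec _ Ls); tauto). contradiction.
  - specialize (Hat B (in_or_app _ _ _ (or_intror HBR))).
    exists B. split; [|exact HBR].
    destruct B; simpl in *; try discriminate; unfold v in HvB;
      destruct (in_dec form_eq_dec _ Ls) as [Hin|]; easy.
Qed.

Section Tautologies.
Variables (l : level) (m : modext) (x : wlab).

Definition der_at (Ls Rs : list form) : Prop := der l m (map (LF x) Ls) (map (LF x) Rs).

Lemma der_at_perm Ls Rs Ls' Rs' : Permutation Ls Ls' -> Permutation Rs Rs' ->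
  der_at Ls Rs -> der_at Ls' Rs'.
Proof. intros HL HR H. eapply der_perm; [exact H|apply Permutation_map, HL|apply Permutation_map, HR]. Qed.

Lemma der_at_left C Ls Rs : compound C = true -> bvalid (C :: Ls) Rs ->
  (forall Ls' Rs', fsizes Ls' + fsizes Rs' < fsizes (C :: Ls) + fsizes Rs -> bvalid Ls' Rs' -> der_at Ls' Rs') ->
  der_at (C :: Ls) Rs.
Proof.
  intros HC H IH. unfold fsizes in IH; simpl in IH.
  destruct C as [p| |A B|A B|A B|A B]; try discriminate; unfold der_at; simpl.
  - apply der_andL. apply (IH (A :: B :: Ls) Rs); [simpl; lia|].
    intros v Hall. apply H. intros D [<-|HD]; simpl; [rewrite (Hall A), (Hall B)|apply Hall]; simpl; auto.
  - apply der_orL; [apply (IH (A :: Ls) Rs)|apply (IH (B :: Ls) Rs)]; try (simpl; lia);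
      intros v Hall; apply H; intros D [<-|HD]; simpl; try (apply Hall; simpl; auto).
    + rewrite (Hall A); simpl; auto.
    + rewrite (Hall B); simpl; auto. apply orb_true_r.
  - apply der_impL; [apply (IH Ls (A :: Rs))|apply (IH (B :: Ls) Rs)]; try (simpl; lia).
    + intros v Hall. destruct (beval v A) eqn:EA; [exists A; simpl; auto|].
      destruct (H v) as [B0 [HB0 HvB0]]; [|exists B0; simpl; auto].
      intros D [<-|HD]; [simpl; rewrite EA; auto|auto].
    + intros v Hall. apply H. intros D [<-|HD]; [|apply Hall; simpl; auto].
      simpl. rewrite (Hall B); [destruct (beval v A); auto|simpl; auto].
Qed.

Lemma der_at_right C Ls Rs : compound C = true -> bvalid Ls (C :: Rs) ->
  (forall Ls' Rs', fsizes Ls' + fsizes Rs' < fsizes Ls + fsizes (C :: Rs) -> bvalid Ls' Rs' -> der_at Ls' Rs') ->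
  der_at Ls (C :: Rs).
Proof.
  intros HC H IH. unfold fsizes in IH; simpl in IH.
  destruct C as [p| |A B|A B|A B|A B]; try discriminate; unfold der_at; simpl.
  - apply der_andR; [apply (IH Ls (A :: Rs))|apply (IH Ls (B :: Rs))]; try (simpl; lia);
      intros v Hall; destruct (H v Hall) as [B0 [[<-|HB0] HvB0]]; try (exists B0; simpl; auto; fail);
      simpl in HvB0; apply andb_true_iff in HvB0; [exists A|exists B]; simpl; tauto.
  - apply der_orR. apply (IH Ls (A :: B :: Rs)); [simpl; lia|].
    intros v Hall. destruct (H v Hall) as [B0 [[<-|HB0] HvB0]]; [|exists B0; simpl; auto].
    simpl in HvB0. apply orb_true_iff in HvB0 as [?|?]; [exists A|exists B]; simpl; auto.
  - apply der_impR. apply (IH (A :: Ls) (B :: Rs)); [simpl; lia|].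
    intros v Hall. destruct (H v) as [B0 [[<-|HB0] HvB0]]; [intros; apply Hall; simpl; auto| |exists B0; simpl; auto].
    simpl in HvB0. rewrite (Hall A) in HvB0; [|now left]. exists B. simpl; auto.
Qed.

Lemma der_at_bvalid Ls Rs : bvalid Ls Rs -> der_at Ls Rs.
Proof.
  remember (fsizes Ls + fsizes Rs) as n eqn:En. revert Ls Rs En.
  induction n as [n IH] using lt_wf_ind. intros Ls Rs -> H.
  assert (IH' : forall Ls' Rs', fsizes Ls' + fsizes Rs' < fsizes Ls + fsizes Rs ->
                  bvalid Ls' Rs' -> der_at Ls' Rs') by (intros; eapply IH; eauto).
  destruct (existsb compound Ls) eqn:EL; [|destruct (existsb compound Rs) eqn:ER].
  - apply existsb_exists in EL as (C & HC & HCc).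
    destruct (Permutation_split C Ls HC) as [Ls' HLs].
    apply (der_at_perm (C :: Ls') Rs); [symmetry; exact HLs|reflexivity|].
    apply der_at_left; [exact HCc|eapply bvalid_perm; eauto|].
    rewrite <- (fsizes_perm _ _ HLs). exact IH'.
  - apply existsb_exists in ER as (C & HC & HCc).
    destruct (Permutation_split C Rs HC) as [Rs' HRs].
    apply (der_at_perm Ls (C :: Rs')); [reflexivity|symmetry; exact HRs|].
    apply der_at_right; [exact HCc|eapply bvalid_perm; eauto|].
    rewrite <- (fsizes_perm _ _ HRs). exact IH'.
  - destruct (bvalid_atomic Ls Rs) as [HB|(A & HAL & HAR)]; [|exact H| |].
    + intros A HA. destruct (compound A) eqn:EA; [|reflexivity].
      apply in_app_or in HA as [HA|HA]; [rewrite <- EL|rewrite <- ER]; symmetry; apply existsb_exists; eauto.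
    + apply (der_botL_in l m x). apply in_map, HB.
    + apply (der_id l m A x); apply in_map; assumption.
Qed.

End Tautologies.

Theorem der_tautology l m A x : tautology A -> der l m [] [LF x A].
Proof.
  intro H. apply (der_at_bvalid l m x [] [A]). intros v _. exists A. split; [now left|apply H].
Qed.

(** * The axioms of the Hilbert systems *)

Lemma der_incl l m L R G D : der l m L R -> incl L G -> incl R D -> der l m G D.
Proof.
  intros H HL HR. assert (HGD : der l m (L ++ G) (R ++ D)) by (apply der_weaken, H).
  clear H. revert G HL HGD. induction L as [|F L IH]; intros G HL HGD; simpl in *.
  - clear HL. revert D HR HGD. induction R as [|F R IH]; intros D HR HGD; simpl in *; [exact HGD|].
    apply IH; [intros z Hz; apply HR; now right|].
    apply (der_contr_inR l m F); [apply in_or_app; right; apply HR; now left|exact HGD].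
  - apply IH; [intros z Hz; apply HL; now right|].
    apply (der_contr_inL l m F); [apply in_or_app; right; apply HL; now left|exact HGD].
Qed.

Lemma der_prop l m y Ls Rs G D : incl (map (LF y) Ls) G -> incl (map (LF y) Rs) D ->
  (forall v, implb (forallb (beval v) Ls) (existsb (beval v) Rs) = true) -> der l m G D.
Proof.
  intros HL HR Hv. apply (der_incl l m (map (LF y) Ls) (map (LF y) Rs)); [|exact HL|exact HR].
  apply der_at_bvalid. intros v Hall. specialize (Hv v).
  rewrite (proj2 (forallb_forall _ _) Hall) in Hv. apply existsb_exists in Hv. exact Hv.
Qed.

Lemma hasW_hasT l : hasW l -> hasT l.
Proof. unfold hasW, hasT; lia. Qed.

Ltac fresh_num := simpl; lia.
Ltac by_prop y Ls Rs := apply (der_prop _ _ y Ls Rs); [incl_tac|incl_tac|intro; simpl;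
  repeat match goal with |- context [beval ?v ?X] => destruct (beval v X) end; reflexivity].

Section Ax.
Variables (l : level) (m : modext).

Lemma ax_ID A x : der l m [] [LF x (Cond A A)].
Proof.
  apply (der_RCond l m 0); [fresh_num|].
  apply (der_Ref l m (NV 0)).
  apply (der_RBar l m (NV 0) (NV 0) x A A); [mem_tac|mem_tac|mem_tac| |].
  - apply (closes_id_Ex l m A (der_id l m A) (NV 0)); mem_tac.
  - apply (der_RAll l m (S x)); [fresh_num|]. apply der_impR. apply (der_id l m A (S x)); mem_tac.
Qed.

Lemma ax_RAnd A B C x : der l m [] [LF x (Imp (And (Cond A B) (Cond A C)) (Cond A (And B C)))].
Proof.
  apply der_impR. apply der_andL.
  apply (der_RCond l m 0); [fresh_num|].
  apply (der_LCond l m (NV 0) x A B); [mem_tac|mem_tac| |].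
  - apply (closes_id_Ex l m A (der_id l m A) (NV 0)); mem_tac.
  - apply (der_LBar l m 1); [fresh_num|].
    apply (der_LCond l m (NV 1) x A C); [mem_tac|mem_tac| |].
    + apply (closes_id_Ex l m A (der_id l m A) (NV 1)); mem_tac.
    + apply (der_LBar l m 2); [fresh_num|].
      apply (der_Tr l m (NV 0) (NV 1) (NV 2)); [mem_tac|mem_tac|].
      apply (der_RBar l m (NV 2) (NV 0) x A (And B C)); [mem_tac|mem_tac|mem_tac| |].
      * apply (closes_id_Ex l m A (der_id l m A) (NV 2)); mem_tac.
      * apply (der_RAll l m (S x)); [fresh_num|].
        apply (der_LAll l m (S x) (NV 2) (Imp A C)); [mem_tac|mem_tac|].
        apply (der_LSub l m (S x) (NV 2) (NV 1)); [mem_tac|mem_tac|].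
        apply (der_LAll l m (S x) (NV 1) (Imp A B)); [mem_tac|mem_tac|].
        by_prop (S x) [Imp A B; Imp A C] [Imp A (And B C)].
Qed.

Lemma ax_CM A B C x : der l m [] [LF x (Imp (And (Cond A B) (Cond A C)) (Cond (And A B) C))].
Proof.
  apply der_impR. apply der_andL.
  apply (der_RCond l m 0); [fresh_num|].
  apply (der_LCond l m (NV 0) x A B); [mem_tac|mem_tac| |].
  - apply (der_LEx_in l m (S x) (NV 0) (And A B)); [mem_tac|fresh_num|].
    apply (der_REx l m (S x) (NV 0) A); [mem_tac|mem_tac|].
    by_prop (S x) [And A B] [A].
  - apply (der_LBar l m 1); [fresh_num|].
    apply (der_LCond l m (NV 1) x A C); [mem_tac|mem_tac| |].
    + apply (closes_id_Ex l m A (der_id l m A) (NV 1)); mem_tac.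
    + apply (der_LBar l m 2); [fresh_num|].
      apply (der_Tr l m (NV 0) (NV 1) (NV 2)); [mem_tac|mem_tac|].
      apply (der_RBar l m (NV 2) (NV 0) x (And A B) C); [mem_tac|mem_tac|mem_tac| |].
      * apply (der_LEx_in l m (S x) (NV 2) A); [mem_tac|fresh_num|].
        apply (der_LSub l m (S x) (NV 2) (NV 1)); [mem_tac|mem_tac|].
        apply (der_LAll l m (S x) (NV 1) (Imp A B)); [mem_tac|mem_tac|].
        apply (der_REx l m (S x) (NV 2) (And A B)); [mem_tac|mem_tac|].
        by_prop (S x) [A; Imp A B] [And A B].
      * apply (der_RAll l m (S x)); [fresh_num|].
        apply (der_LAll l m (S x) (NV 2) (Imp A C)); [mem_tac|mem_tac|].
        by_prop (S x) [Imp A C] [Imp (And A B) C].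
Qed.

Lemma ax_OR A B C x : der l m [] [LF x (Imp (And (Cond A C) (Cond B C)) (Cond (Or A B) C))].
Proof.
  apply der_impR. apply der_andL.
  apply (der_RCond l m 0); [fresh_num|].
  apply (der_LCond l m (NV 0) x A C); [mem_tac|mem_tac| |].
  - apply (der_LCond l m (NV 0) x B C); [mem_tac|mem_tac| |].
    + apply (der_LEx_in l m (S x) (NV 0) (Or A B)); [mem_tac|fresh_num|].
      apply (der_REx l m (S x) (NV 0) A); [mem_tac|mem_tac|].
      apply (der_REx l m (S x) (NV 0) B); [mem_tac|mem_tac|].
      by_prop (S x) [Or A B] [A; B].
    + apply (der_LBar l m 1); [fresh_num|].
      apply (der_RBar l m (NV 1) (NV 0) x (Or A B) C); [mem_tac|mem_tac|mem_tac| |].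
      * apply (der_LEx_in l m (S x) (NV 1) B); [mem_tac|fresh_num|].
        apply (der_REx l m (S x) (NV 1) (Or A B)); [mem_tac|mem_tac|].
        by_prop (S x) [B] [Or A B].
      * apply (der_RAll l m (S x)); [fresh_num|].
        apply (der_LAll l m (S x) (NV 1) (Imp B C)); [mem_tac|mem_tac|].
        apply (der_LSub l m (S x) (NV 1) (NV 0)); [mem_tac|mem_tac|].
        apply (der_REx l m (S x) (NV 0) A); [mem_tac|mem_tac|].
        by_prop (S x) [Imp B C] [A; Imp (Or A B) C].
  - apply (der_LBar l m 1); [fresh_num|].
    apply (der_LCond l m (NV 1) x B C); [mem_tac|mem_tac| |].
    + apply (der_RBar l m (NV 1) (NV 0) x (Or A B) C); [mem_tac|mem_tac|mem_tac| |].
      * apply (der_LEx_in l m (S x) (NV 1) A); [mem_tac|fresh_num|].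
        apply (der_REx l m (S x) (NV 1) (Or A B)); [mem_tac|mem_tac|].
        by_prop (S x) [A] [Or A B].
      * apply (der_RAll l m (S x)); [fresh_num|].
        apply (der_LAll l m (S x) (NV 1) (Imp A C)); [mem_tac|mem_tac|].
        apply (der_REx l m (S x) (NV 1) B); [mem_tac|mem_tac|].
        by_prop (S x) [Imp A C] [B; Imp (Or A B) C].
    + apply (der_LBar l m 2); [fresh_num|].
      apply (der_Tr l m (NV 0) (NV 1) (NV 2)); [mem_tac|mem_tac|].
      apply (der_RBar l m (NV 2) (NV 0) x (Or A B) C); [mem_tac|mem_tac|mem_tac| |].
      * apply (der_LEx_in l m (S x) (NV 2) B); [mem_tac|fresh_num|].
        apply (der_REx l m (S x) (NV 2) (Or A B)); [mem_tac|mem_tac|].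
        by_prop (S x) [B] [Or A B].
      * apply (der_RAll l m (S x)); [fresh_num|].
        apply (der_LAll l m (S x) (NV 2) (Imp B C)); [mem_tac|mem_tac|].
        apply (der_LSub l m (S x) (NV 2) (NV 1)); [mem_tac|mem_tac|].
        apply (der_LAll l m (S x) (NV 1) (Imp A C)); [mem_tac|mem_tac|].
        by_prop (S x) [Imp A C; Imp B C] [Imp (Or A B) C].
Qed.


Lemma ax_N x : hasN l -> der l m [] [LF x (Neg (Cond Top Bot))].
Proof.
  intro Hl. unfold Neg, Top. apply der_impR.
  apply (der_N l m 0 x); [auto|fresh_num|].
  apply (der_0 l m (S x) (NV 0) x); [auto|mem_tac|fresh_num|].
  apply (der_LCond l m (NV 0) x (Imp Bot Bot) Bot); [mem_tac|mem_tac| |].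
  - apply (der_REx l m (S x) (NV 0) (Imp Bot Bot)); [mem_tac|mem_tac|].
    by_prop (S x) (@nil form) [Imp Bot Bot].
  - apply (der_LBar l m 1); [fresh_num|].
    apply (der_LEx_in l m (S (S x)) (NV 1) (Imp Bot Bot)); [mem_tac|fresh_num|].
    apply (der_LAll l m (S (S x)) (NV 1) (Imp (Imp Bot Bot) Bot)); [mem_tac|mem_tac|].
    by_prop (S (S x)) [Imp (Imp Bot Bot) Bot] (@nil form).
Qed.

Lemma ax_T A x : hasT l -> der l m [] [LF x (Imp A (Neg (Cond A Bot)))].
Proof.
  intro Hl. unfold Neg. apply der_impR. apply der_impR.
  apply (der_T l m 0 x); [auto|fresh_num|].
  apply (der_LCond l m (NV 0) x A Bot); [mem_tac|mem_tac| |].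
  - apply (der_REx l m x (NV 0) A); [mem_tac|mem_tac|]. apply (der_id l m A x); mem_tac.
  - apply (der_LBar l m 1); [fresh_num|].
    apply (der_LEx_in l m (S x) (NV 1) A); [mem_tac|fresh_num|].
    apply (der_LAll l m (S x) (NV 1) (Imp A Bot)); [mem_tac|mem_tac|].
    by_prop (S x) [A; Imp A Bot] (@nil form).
Qed.

Lemma ax_W A B x : hasW l -> der l m [] [LF x (Imp (Cond A B) (Imp A B))].
Proof.
  intro Hl. apply der_impR. apply der_impR.
  apply (der_T l m 0 x); [apply hasW_hasT; auto|fresh_num|].
  apply (der_LCond l m (NV 0) x A B); [mem_tac|mem_tac| |].
  - apply (der_REx l m x (NV 0) A); [mem_tac|mem_tac|]. apply (der_id l m A x); mem_tac.
  - apply (der_LBar l m 1); [fresh_num|].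
    apply (der_W l m (NV 1) x); [auto|mem_tac|].
    apply (der_LAll l m x (NV 1) (Imp A B)); [mem_tac|mem_tac|].
    by_prop x [A; Imp A B] [B].
Qed.

Definition transfers (B : form) : Prop :=
  (forall x y G D, In (InW y (NS x)) G -> In (LF x B) G -> In (LF y B) D -> der l m G D) /\
  (forall x y G D, In (InW y (NS x)) G -> In (LF y B) G -> In (LF x B) D -> der l m G D).

(* With [y ∈ {x}], Repl turns [c ∈ N(x)] into [c ∈ N(y)] and back. *)
Lemma transfers_Cnd (Hl : hasC l) a B1 B2 :
  (forall x y G D, In (InW y (NS x)) G -> In (Cnd x a B1 B2) G -> In (Cnd y a B1 B2) D -> der l m G D) /\
  (forall x y G D, In (InW y (NS x)) G -> In (Cnd y a B1 B2) G -> In (Cnd x a B1 B2) D -> der l m G D).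
Proof.
  assert (HEx := closes_id_Ex l m B1 (der_id l m B1)).
  assert (HAll := closes_id_All l m _ (closes_id_Imp l m B1 B2 (der_id l m B1) (der_id l m B2))).
  split; intros x y G D Hxy H1 H2; set (j := new_nvar (G ++ D)).
  - apply (der_LBar_in l m j x a B1 B2 G D H1); [new_label_fresh|].
    apply (der_Repl1 l m (AN (NV j)) x y); [auto|mem_tac|mem_tac|]. simpl.
    apply (der_RBar l m (NV j) a y B1 B2); [mem_tac|mem_tac|mem_tac|apply (HEx (NV j))|apply (HAll (NV j))]; mem_tac.
  - apply (der_LBar_in l m j y a B1 B2 G D H1); [new_label_fresh|].
    apply (der_Repl2 l m (AN (NV j)) x y); [auto|discriminate|mem_tac|mem_tac|]. simpl.
    apply (der_RBar l m (NV j) a x B1 B2); [mem_tac|mem_tac|mem_tac|apply (HEx (NV j))|apply (HAll (NV j))]; mem_tac.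
Qed.

Lemma transfers_Cond (Hl : hasC l) B1 B2 : transfers (Cond B1 B2).
Proof.
  assert (HEx := closes_id_Ex l m B1 (der_id l m B1)).
  split; intros x y G D Hxy H1 H2; set (n := new_nvar (G ++ D)).
  - apply (der_RCond_in l m n y B1 B2 G D H2); [new_label_fresh|].
    apply (der_Repl2 l m (AN (NV n)) x y); [auto|discriminate|mem_tac|mem_tac|]. simpl.
    apply (der_LCond l m (NV n) x B1 B2); [mem_tac|mem_tac|apply (HEx (NV n)); mem_tac|].
    apply (proj1 (transfers_Cnd Hl (NV n) B1 B2) x y); mem_tac.
  - apply (der_RCond_in l m n x B1 B2 G D H2); [new_label_fresh|].
    apply (der_Repl1 l m (AN (NV n)) x y); [auto|mem_tac|mem_tac|]. simpl.
    apply (der_LCond l m (NV n) y B1 B2); [mem_tac|mem_tac|apply (HEx (NV n)); mem_tac|].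
    apply (proj2 (transfers_Cnd Hl (NV n) B1 B2) x y); mem_tac.
Qed.

Lemma transfers_all (Hl : hasC l) B : transfers B.
Proof.
  induction B as [p| |B1 [IH1 IH1'] B2 [IH2 IH2']|B1 [IH1 IH1'] B2 [IH2 IH2']|B1 [IH1 IH1'] B2 [IH2 IH2']|B1 B2];
    [|split; intros x y G D Hxy H1 H2; eapply der_botL_in; eauto| | | |apply transfers_Cond, Hl];
    split; intros x y G D Hxy H1 H2.
  - apply (der_Repl1 l m (AProp p) x y); [auto|exact Hxy|exact H1|]. apply (der_init_in l m y p); mem_tac.
  - apply (der_Repl2 l m (AProp p) x y); [auto|discriminate|exact Hxy|exact H1|].
    apply (der_init_in l m x p); mem_tac.
  - apply (der_andL_in l m x B1 B2 G D H1), (der_andR_in l m y B1 B2); [mem_tac|apply (IH1 x y)|apply (IH2 x y)]; mem_tac.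
  - apply (der_andL_in l m y B1 B2 G D H1), (der_andR_in l m x B1 B2); [mem_tac|apply (IH1' x y)|apply (IH2' x y)]; mem_tac.
  - apply (der_orR_in l m y B1 B2 G D H2), (der_orL_in l m x B1 B2); [mem_tac|apply (IH1 x y)|apply (IH2 x y)]; mem_tac.
  - apply (der_orR_in l m x B1 B2 G D H2), (der_orL_in l m y B1 B2); [mem_tac|apply (IH1' x y)|apply (IH2' x y)]; mem_tac.
  - apply (der_impR_in l m y B1 B2 G D H2), (der_impL_in l m x B1 B2); [mem_tac|apply (IH1' x y)|apply (IH2 x y)]; mem_tac.
  - apply (der_impR_in l m x B1 B2 G D H2), (der_impL_in l m y B1 B2); [mem_tac|apply (IH1 x y)|apply (IH2' x y)]; mem_tac.
Qed.

Lemma ax_C A B x : hasC l -> der l m [] [LF x (Imp (And A B) (Cond A B))].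
Proof.
  intro Hl. apply der_impR. apply der_andL.
  apply (der_RCond l m 0); [fresh_num|].
  apply (der_C l m (NV 0) x); [auto|mem_tac|].
  apply (der_Single l m x); [auto|mem_tac|].
  apply (der_RBar l m (NS x) (NV 0) x A B); [mem_tac|mem_tac|mem_tac| |].
  - apply (der_REx l m x (NS x) A); [mem_tac|mem_tac|]. apply (der_id l m A x); mem_tac.
  - apply (der_RAll l m (S x)); [fresh_num|]. apply der_impR.
    apply (proj1 (transfers_all Hl B) x (S x)); mem_tac.
Qed.

Lemma ax_U1 A x : m = MU -> der l m [] [LF x (Imp (Cond (Neg A) Bot) (Cond (Neg (Cond (Neg A) Bot)) Bot))].
Proof.
  intro Hm. unfold Neg. apply der_impR.
  apply (der_RCond l m 0); [fresh_num|].
  apply (der_LEx_in l m (S x) (NV 0) (Imp (Cond (Imp A Bot) Bot) Bot)); [mem_tac|fresh_num|].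
  apply (der_impL_in l m (S x) (Cond (Imp A Bot) Bot) Bot); [mem_tac| |apply (der_botL_in l m (S x)); mem_tac].
  apply (der_RCond_in l m 1 (S x) (Imp A Bot) Bot); [mem_tac|fresh_num|].
  apply (der_LEx_in l m (S (S x)) (NV 1) (Imp A Bot)); [mem_tac|fresh_num|].
  apply (der_U1 l m 2 (NV 0) (NV 1) x (S x) (S (S x))); [auto|mem_tac|mem_tac|mem_tac|mem_tac|fresh_num|].
  apply (der_LCond l m (NV 2) x (Imp A Bot) Bot); [mem_tac|mem_tac| |].
  - apply (der_REx l m (S (S x)) (NV 2) (Imp A Bot)); [mem_tac|mem_tac|]. apply (der_id l m (Imp A Bot) (S (S x))); mem_tac.
  - apply (der_LBar l m 3); [fresh_num|].
    apply (der_LEx_in l m (S (S (S x))) (NV 3) (Imp A Bot)); [mem_tac|fresh_num|].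
    apply (der_LAll l m (S (S (S x))) (NV 3) (Imp (Imp A Bot) Bot)); [mem_tac|mem_tac|].
    by_prop (S (S (S x))) [Imp A Bot; Imp (Imp A Bot) Bot] (@nil form).
Qed.

Lemma ax_U2 A x : m = MU -> der l m [] [LF x (Imp (Neg (Cond A Bot)) (Cond (Cond A Bot) Bot))].
Proof.
  intro Hm. unfold Neg. apply der_impR.
  apply (der_impL_in l m x (Cond A Bot) Bot); [mem_tac| |apply (der_botL_in l m x); mem_tac].
  apply (der_RCond_in l m 0 x (Cond A Bot) Bot); [mem_tac|fresh_num|].
  apply (der_LEx_in l m (S x) (NV 0) (Cond A Bot)); [mem_tac|fresh_num|].
  apply (der_RCond_in l m 1 x A Bot); [mem_tac|fresh_num|].
  apply (der_LEx_in l m (S (S x)) (NV 1) A); [mem_tac|fresh_num|].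
  apply (der_U2 l m 2 (NV 0) (NV 1) x (S x) (S (S x))); [auto|mem_tac|mem_tac|mem_tac|mem_tac|fresh_num|].
  apply (der_LCond l m (NV 2) (S x) A Bot); [mem_tac|mem_tac| |].
  - apply (der_REx l m (S (S x)) (NV 2) A); [mem_tac|mem_tac|]. apply (der_id l m A (S (S x))); mem_tac.
  - apply (der_LBar l m 3); [fresh_num|].
    apply (der_LEx_in l m (S (S (S x))) (NV 3) A); [mem_tac|fresh_num|].
    apply (der_LAll l m (S (S (S x))) (NV 3) (Imp A Bot)); [mem_tac|mem_tac|].
    by_prop (S (S (S x))) [A; Imp A Bot] (@nil form).
Qed.

Lemma ax_A1 A B C x : m = MA -> der l m [] [LF x (Imp (Cond A B) (Cond C (Cond A B)))].
Proof.
  intro Hm. apply der_impR.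
  apply (der_RCond l m 0); [fresh_num|].
  apply (der_Ref l m (NV 0)).
  apply (der_RBar l m (NV 0) (NV 0) x C (Cond A B)); [mem_tac|mem_tac|mem_tac| |].
  - apply (closes_id_Ex l m C (der_id l m C) (NV 0)); mem_tac.
  - apply (der_RAll l m (S x)); [fresh_num|]. apply der_impR.
    apply (der_RCond l m 1); [fresh_num|].
    apply (der_A2 l m (NV 0) (NV 1) x (S x)); [auto|mem_tac|mem_tac|mem_tac|].
    apply (der_LCond l m (NV 1) x A B); [mem_tac|mem_tac| |].
    + apply (closes_id_Ex l m A (der_id l m A) (NV 1)); mem_tac.
    + apply (der_LBar l m 2); [fresh_num|].
      apply (der_A1 l m (NV 0) (NV 2) x (S x)); [auto|mem_tac|mem_tac|mem_tac|].
      apply (der_RBar l m (NV 2) (NV 1) (S x) A B); [mem_tac|mem_tac|mem_tac| |].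
      * apply (closes_id_Ex l m A (der_id l m A) (NV 2)); mem_tac.
      * apply (closes_id_All l m (Imp A B) (closes_id_Imp l m A B (der_id l m A) (der_id l m B)) (NV 2)); mem_tac.
Qed.

Lemma ax_A2 A B C x : m = MA -> der l m [] [LF x (Imp (Neg (Cond A B)) (Cond C (Neg (Cond A B))))].
Proof.
  intro Hm. unfold Neg. apply der_impR.
  apply (der_impL_in l m x (Cond A B) Bot); [mem_tac| |apply (der_botL_in l m x); mem_tac].
  apply (der_RCond_in l m 0 x C (Imp (Cond A B) Bot)); [mem_tac|fresh_num|].
  apply (der_Ref l m (NV 0)).
  apply (der_RBar l m (NV 0) (NV 0) x C (Imp (Cond A B) Bot)); [mem_tac|mem_tac|mem_tac| |].
  - apply (closes_id_Ex l m C (der_id l m C) (NV 0)); mem_tac.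
  - apply (der_RAll l m (S x)); [fresh_num|]. apply der_impR. apply der_impR.
    apply (der_RCond_in l m 1 x A B); [mem_tac|fresh_num|].
    apply (der_A1 l m (NV 0) (NV 1) x (S x)); [auto|mem_tac|mem_tac|mem_tac|].
    apply (der_LCond l m (NV 1) (S x) A B); [mem_tac|mem_tac| |].
    + apply (closes_id_Ex l m A (der_id l m A) (NV 1)); mem_tac.
    + apply (der_LBar l m 2); [fresh_num|].
      apply (der_A2 l m (NV 0) (NV 2) x (S x)); [auto|mem_tac|mem_tac|mem_tac|].
      apply (der_RBar l m (NV 2) (NV 1) x A B); [mem_tac|mem_tac|mem_tac| |].
      * apply (closes_id_Ex l m A (der_id l m A) (NV 2)); mem_tac.
      * apply (closes_id_All l m (Imp A B) (closes_id_Imp l m A B (der_id l m A) (der_id l m B)) (NV 2)); mem_tac.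
Qed.

End Ax.

(** * From Hilbert derivations to sequent derivations *)

Section Hilbert.
Variables (l : level) (m : modext).

Definition entails (A B : form) : Prop :=
  forall y G D, In (LF y A) G -> In (LF y B) D -> der l m G D.

Lemma entails_of_imp A B : (forall y, der l m [] [LF y (Imp A B)]) -> entails A B.
Proof.
  intros H y G D HA HB. apply (der_incl l m [LF y A] [LF y B]); [apply inv_impR, H| |];
    intros z [<-|[]]; assumption.
Qed.

Lemma der_RCEA_half A B C x : entails A B -> entails B A ->
  der l m [] [LF x (Imp (Cond A C) (Cond B C))].
Proof.
  intros AB BA. apply der_impR.
  apply (der_RCond l m 0); [fresh_num|].
  apply (der_LCond l m (NV 0) x A C); [mem_tac|mem_tac| |].
  - apply (der_LEx_in l m (S x) (NV 0) B); [mem_tac|fresh_num|].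
    apply (der_REx l m (S x) (NV 0) A); [mem_tac|mem_tac|].
    apply (BA (S x)); mem_tac.
  - apply (der_LBar l m 1); [fresh_num|].
    apply (der_RBar l m (NV 1) (NV 0) x B C); [mem_tac|mem_tac|mem_tac| |].
    + apply (der_LEx_in l m (S x) (NV 1) A); [mem_tac|fresh_num|].
      apply (der_REx l m (S x) (NV 1) B); [mem_tac|mem_tac|].
      apply (AB (S x)); mem_tac.
    + apply (der_RAll l m (S x)); [fresh_num|].
      apply (der_LAll l m (S x) (NV 1) (Imp A C)); [mem_tac|mem_tac|].
      apply (der_impR_in l m (S x) B C); [mem_tac|].
      apply (der_impL_in l m (S x) A C); [mem_tac| |].
      * apply (BA (S x)); mem_tac.
      * apply (der_id l m C (S x)); mem_tac.
Qed.

Lemma der_RCEA A B C x : (forall y, der l m [] [LF y (Iff A B)]) ->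
  der l m [] [LF x (Iff (Cond A C) (Cond B C))].
Proof.
  intro H. unfold Iff in *.
  assert (AB : entails A B) by (apply entails_of_imp; intro y; exact (inv_andR1 l m _ _ _ _ _ (H y))).
  assert (BA : entails B A) by (apply entails_of_imp; intro y; exact (inv_andR2 l m _ _ _ _ _ (H y))).
  apply der_andR; apply der_RCEA_half; assumption.
Qed.

Lemma der_RCK A B C x : (forall y, der l m [] [LF y (Imp A B)]) ->
  der l m [] [LF x (Imp (Cond C A) (Cond C B))].
Proof.
  intro H. assert (AB : entails A B) by (apply entails_of_imp, H).
  apply der_impR.
  apply (der_RCond l m 0); [fresh_num|].
  apply (der_LCond l m (NV 0) x C A); [mem_tac|mem_tac| |].
  - apply (closes_id_Ex l m C (der_id l m C) (NV 0)); mem_tac.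
  - apply (der_LBar l m 1); [fresh_num|].
    apply (der_RBar l m (NV 1) (NV 0) x C B); [mem_tac|mem_tac|mem_tac| |].
    + apply (closes_id_Ex l m C (der_id l m C) (NV 1)); mem_tac.
    + apply (der_RAll l m (S x)); [fresh_num|].
      apply (der_LAll l m (S x) (NV 1) (Imp C A)); [mem_tac|mem_tac|].
      apply (der_impR_in l m (S x) C B); [mem_tac|].
      apply (der_impL_in l m (S x) C A); [mem_tac| |].
      * apply (der_id l m C (S x)); mem_tac.
      * apply (AB (S x)); mem_tac.
Qed.

Lemma der_MP A B x : der l m [] [LF x (Imp A B)] -> der l m [] [LF x A] -> der l m [] [LF x B].
Proof.
  intros HAB HA. apply (der_cut l m (LF x A)); [|exact (inv_impR l m _ _ _ _ _ HAB)].
  apply der_perm with ([] ++ []) ([LF x A] ++ [LF x B]); [apply der_weaken, HA|reflexivity|perm].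
Qed.

Theorem der_hilbert A : hilbert l m A -> forall x, der l m [] [LF x A].
Proof.
  induction 1; intro x.
  - apply der_tautology; assumption.
  - eapply der_MP; eauto.
  - apply der_RCEA; assumption.
  - apply der_RCK; assumption.
  - apply ax_ID.
  - apply ax_RAnd.
  - apply ax_CM.
  - apply ax_OR.
  - apply ax_N; assumption.
  - apply ax_T; assumption.
  - apply ax_W; assumption.
  - apply ax_C; assumption.
  - apply ax_U1; assumption.
  - apply ax_U2; assumption.
  - apply ax_A1; assumption.
  - apply ax_A2; assumption.
Qed.

End Hilbert.

(** * Back to the calculi CL^S *)

Definition relational (F : lform) : bool :=
  match F with InN _ _ | InW _ _ | Sub _ _ => true | _ => false end.

Definition ctx_equiv (G G' : list lform) : Prop :=
  (forall F, In F G <-> In F G') /\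
  Permutation (filter (fun F => negb (relational F)) G) (filter (fun F => negb (relational F)) G').

Lemma ctx_equiv_refl G : ctx_equiv G G.
Proof. split; [tauto|reflexivity]. Qed.

Lemma ctx_equiv_incl G G' : ctx_equiv G G' -> incl G' G.
Proof. intros [H _] F. apply H. Qed.

Lemma ctx_equiv_perm G1 G2 G1' G2' : Permutation G1 G2 -> Permutation G1' G2' ->
  ctx_equiv G1 G1' -> ctx_equiv G2 G2'.
Proof.
  intros H H' [Hs Hm]. split.
  - intro F. rewrite <- (Permutation_mem _ _ F H), <- (Permutation_mem _ _ F H'). apply Hs.
  - rewrite <- (Permutation_filter _ _ _ H), <- (Permutation_filter _ _ _ H'). exact Hm.
Qed.

Lemma ctx_equiv_app L G G' : ctx_equiv G G' -> ctx_equiv (L ++ G) (L ++ G').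
Proof.
  intros [Hs Hm]. split.
  - intro F. rewrite !in_app_iff, Hs. tauto.
  - rewrite !filter_app. apply Permutation_app_head, Hm.
Qed.

Lemma ctx_equiv_dup F G G' : relational F = true -> In F G -> ctx_equiv G G' -> ctx_equiv (F :: G) G'.
Proof.
  intros HF HFG [Hs Hm]. split.
  - intro F'. simpl. rewrite <- Hs. intuition (subst; auto).
  - simpl. rewrite HF. exact Hm.
Qed.

Lemma ctx_equiv_extract P G G' : relational P = false -> ctx_equiv (P :: G) G' ->
  exists G'', Permutation G' (P :: G'') /\ ctx_equiv G G''.
Proof.
  intros HP [Hs Hm].
  destruct (Permutation_split P G') as [G'' HG'']; [apply Hs; now left|].
  exists G''. split; [exact HG''|].
  assert (Hf : Permutation (filter (fun F => negb (relational F)) G) (filter (fun F => negb (relational F)) G'')).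
  { apply (Permutation_cons_inv (a := P)).
    rewrite (Permutation_filter _ _ _ HG'') in Hm. simpl in Hm. rewrite HP in Hm. exact Hm. }
  split; [|exact Hf]. intro F. destruct (relational F) eqn:EF.
  - assert (F <> P) by (intros ->; congruence).
    specialize (Hs F). rewrite (Permutation_mem _ _ F HG'') in Hs. simpl in Hs. intuition congruence.
  - pose proof (Permutation_mem _ _ F Hf) as HFiff. rewrite !filter_In, EF in HFiff. simpl in HFiff. tauto.
Qed.

Lemma Permutation_NoDup_incl (NL G : list lform) : NoDup NL -> incl NL G -> exists R, Permutation G (NL ++ R).
Proof.
  revert G. induction NL as [|F NL IH]; intros G HN HI; [exists G; reflexivity|].
  inversion HN as [|? ? HF HN']; subst.
  destruct (Permutation_split F G (HI F (or_introl eq_refl))) as [G1 HG1].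
  destruct (IH G1 HN') as [R HR].
  - intros z Hz. destruct (Permutation_in _ HG1 (HI z (or_intror Hz))) as [->|?]; [contradiction|assumption].
  - exists R. rewrite HG1, HR. reflexivity.
Qed.

Lemma fresh_w_wlabs y L L' : incl L L' -> ~ In y (wlabs L') -> fresh_w y L.
Proof.
  intros HL Hy F HF Hocc. apply Hy, in_wlabs. exists F. split; [apply HL, HF|].
  destruct F; repeat match goal with a : nlab |- _ => destruct a end; simpl in *; intuition.
Qed.
Lemma fresh_n_nvars n L L' : incl L L' -> ~ In n (nvars L') -> fresh_n n L.
Proof.
  intros HL Hn F HF Hocc. apply Hn, in_nvars. exists F. split; [apply HL, HF|].
  destruct F; repeat match goal with a : nlab |- _ => destruct a end; simpl in *; intuition congruence.
Qed.

Section Translation.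
Variables (l : level) (m : modext).

Definition realizes (G D : list lform) : Prop := forall G', ctx_equiv G G' -> seqder l m G' D.

Lemma realizes_dup F G D : relational F = true -> In F G -> realizes (F :: G) D -> realizes G D.
Proof. intros HF HFG H G' HS. apply H, ctx_equiv_dup; assumption. Qed.

Lemma realizes_keep NLx NRx Ps G0 D0 : NoDup NLx -> NoDup NRx -> incl NLx G0 -> incl NRx D0 ->
  (forall R S, incl (R ++ S) (G0 ++ D0) -> incl G0 (NLx ++ R) ->
     (forall Lp Rp, In (Lp, Rp) Ps -> seqder l m (Lp ++ NLx ++ R) (Rp ++ NRx ++ S)) ->
     seqder l m (NLx ++ R) (NRx ++ S)) ->
  (forall Lp Rp, In (Lp, Rp) Ps -> realizes (Lp ++ G0) (Rp ++ D0)) -> realizes G0 D0.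
Proof.
  intros HNL HNR HNLG HNRD Hrule IH G' HS.
  destruct (Permutation_NoDup_incl NLx G') as [R HR];
    [exact HNL|intros F HF; apply HS, HNLG, HF|].
  destruct (Permutation_NoDup_incl NRx D0 HNR HNRD) as [S HS'].
  apply S_perm with (NLx ++ R) (NRx ++ S); [|symmetry; exact HR|symmetry; exact HS'].
  apply Hrule.
  - intros F HF. apply in_app_or in HF as [HF|HF]; apply in_or_app; [left|right].
    + apply (ctx_equiv_incl _ _ HS), (Permutation_in _ (Permutation_sym HR)), in_or_app. now right.
    + apply (Permutation_in _ (Permutation_sym HS')), in_or_app. now right.
  - intros F HF. apply (Permutation_in _ HR), HS, HF.
  - intros Lp Rp HP. apply S_perm with (Lp ++ NLx ++ R) (Rp ++ D0); [|reflexivity|rewrite HS'; reflexivity].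
    apply (IH Lp Rp HP). apply ctx_equiv_app. exact (ctx_equiv_perm _ _ _ _ (Permutation_refl _) HR HS).
Qed.

Lemma logicalL_relational P : logicalL P -> relational P = false.
Proof. destruct P; simpl; tauto. Qed.

Lemma realizes_logL P y k G0 D0 : logicalL P ->
  ~ In y (wlabs ((P :: G0) ++ D0)) -> ~ In k (nvars ((P :: G0) ++ D0)) ->
  (forall Lp Rp, In (Lp, Rp) (premsL P y k) -> realizes (Lp ++ G0) (Rp ++ D0)) -> realizes (P :: G0) D0.
Proof.
  intros HP Hy Hk IH G' HS.
  destruct (ctx_equiv_extract P G0 G' (logicalL_relational P HP) HS) as (G'' & HG' & HS'').
  apply S_perm with (P :: G'') D0; [|symmetry; exact HG'|reflexivity].
  assert (Hprem : forall Lp Rp, In (Lp, Rp) (premsL P y k) -> seqder l m (Lp ++ G'') (Rp ++ D0))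
    by (intros Lp Rp HLp; apply (IH Lp Rp HLp), ctx_equiv_app, HS'').
  assert (HG'' := ctx_equiv_incl _ _ HS'').
  destruct P as [| | |x [| |A B|A B|A B|]|a A| |x a A B]; simpl in HP; try contradiction.
  - apply S_andL, (Hprem [_; _] []). now left.
  - apply S_orL; [apply (Hprem [_] [])|apply (Hprem [_] [])]; simpl; auto.
  - apply S_impL; [apply (Hprem [] [_])|apply (Hprem [_] [])]; simpl; auto.
  - apply (S_LEx l m y); [|apply (Hprem [_; _] []); now left].
    eapply fresh_w_wlabs; [|exact Hy]. incl_tac.
  - apply (S_LBar l m k); [|apply (Hprem [_; _; _; _] []); now left].
    eapply fresh_n_nvars; [|exact Hk]. incl_tac.
Qed.

Lemma realizes_logR P y k G0 D0 : logicalR P ->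
  ~ In y (wlabs (G0 ++ P :: D0)) -> ~ In k (nvars (G0 ++ P :: D0)) ->
  (forall Lp Rp, In (Lp, Rp) (premsR P y k) -> realizes (Lp ++ G0) (Rp ++ D0)) -> realizes G0 (P :: D0).
Proof.
  intros HP Hy Hk IH G' HS.
  assert (Hprem : forall Lp Rp, In (Lp, Rp) (premsR P y k) -> seqder l m (Lp ++ G') (Rp ++ D0))
    by (intros Lp Rp HLp; apply (IH Lp Rp HLp), ctx_equiv_app, HS).
  assert (HG' := ctx_equiv_incl _ _ HS).
  destruct P as [| | |x [| |A B|A B|A B|A B]| |a A|]; simpl in HP; try contradiction.
  - apply S_andR; [apply (Hprem [] [_])|apply (Hprem [] [_])]; simpl; auto.
  - apply S_orR, (Hprem [] [_; _]). now left.
  - apply S_impR, (Hprem [_] [_]). now left.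
  - apply (S_RCond l m k); [|apply (Hprem [_; _] [_]); now left].
    eapply fresh_n_nvars; [|exact Hk]. incl_tac.
  - apply (S_RAll l m y); [|apply (Hprem [_] [_]); now left].
    eapply fresh_w_wlabs; [|exact Hy]. incl_tac.
Qed.

Ltac realize_keep NLx NRx :=
  match goal with _ : forall Lp Rp, In (Lp, Rp) ?Ps -> _ |- _ => apply (realizes_keep NLx NRx Ps) end; [repeat constructor; simpl; intuition congruence|
    repeat constructor; simpl; intuition congruence|incl_tac|incl_tac| |assumption];
  let R := fresh "R" in let S := fresh "S" in let HRS := fresh "HRS" in let HGR := fresh "HGR" in
  let Hp := fresh "Hp" in intros R S HRS HGR Hp.

Ltac use_prem Hp Lp Rp := eapply S_perm; [apply (Hp Lp Rp); simpl; auto|perm|perm].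

(* The next three rules have instances whose principal atoms coincide; the
   premiss then only repeats an atom of the conclusion. *)
Lemma realizes_Tr a b c G0 D0 : incl [Sub c b; Sub b a] G0 ->
  (forall Lp Rp, In (Lp, Rp) [([Sub c a], [])] -> realizes (Lp ++ G0) (Rp ++ D0)) -> realizes G0 D0.
Proof.
  intros HNL IH. destruct (lform_eq_dec (Sub c b) (Sub b a)) as [E|NE].
  - injection E as -> ->. apply (realizes_dup (Sub a a)); [reflexivity|apply HNL; now left|].
    apply (IH [Sub a a] []). now left.
  - realize_keep [Sub c b; Sub b a] (@nil lform). apply S_Tr. use_prem Hp [Sub c a] (@nil lform).
Qed.

Lemma realizes_Repl1 t x y G0 D0 : hasC l -> incl [InW y (NS x); instAt t x] G0 ->
  (forall Lp Rp, In (Lp, Rp) [([instAt t y], [])] -> realizes (Lp ++ G0) (Rp ++ D0)) -> realizes G0 D0.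
Proof.
  intros Hl HNL IH. destruct (lform_eq_dec (InW y (NS x)) (instAt t x)) as [E|NE].
  - assert (x = y) as <- by (destruct t; simpl in E; congruence).
    apply (realizes_dup (instAt t x)); [rewrite <- E; reflexivity|apply HNL; now right; left|].
    apply (IH [instAt t x] []). now left.
  - realize_keep [InW y (NS x); instAt t x] (@nil lform). apply S_Repl1; [assumption|].
    use_prem Hp [instAt t y] (@nil lform).
Qed.

Lemma realizes_A2 a b x y G0 D0 : m = MA -> incl [InN a x; InW y a; InN b y] G0 ->
  (forall Lp Rp, In (Lp, Rp) [([InN b x], [])] -> realizes (Lp ++ G0) (Rp ++ D0)) -> realizes G0 D0.
Proof.
  intros Hm HNL IH. destruct (lform_eq_dec (InN a x) (InN b y)) as [E|NE].
  - injection E as <- <-. apply (realizes_dup (InN a x)); [reflexivity|apply HNL; now left|].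
    apply (IH [InN a x] []). now left.
  - realize_keep [InN a x; InW y a; InN b y] (@nil lform). apply S_A2; [assumption|].
    use_prem Hp [InN b x] (@nil lform).
Qed.

Lemma realizes_rule Lc Rc NL NR Ps ew en G0 D0 : rule l m Lc Rc NL NR Ps ew en ->
  incl NL G0 -> incl NR D0 -> eigen_fresh ew en ((Lc ++ G0) ++ Rc ++ D0) ->
  (forall Lp Rp, In (Lp, Rp) Ps -> realizes (Lp ++ G0) (Rp ++ D0)) -> realizes (Lc ++ G0) (Rc ++ D0).
Proof.
  intros Hr HNL HNR [Hw Hn] IH.
  assert (Hfn : forall n, en = Some n -> forall L, incl L (G0 ++ D0) -> fresh_n n L) by
    (intros n Hn' L HL; eapply fresh_n_nvars; [|apply (Hn n Hn')]; incl_tac).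
  destruct Hr; simpl.
  - intros G' HS. destruct (ctx_equiv_extract (LF x (Var p)) G0 G' eq_refl HS) as (G'' & HG' & _).
    apply S_perm with (LF x (Var p) :: G'') (LF x (Var p) :: D0); [apply S_init|symmetry; exact HG'|reflexivity].
  - intros G' HS. destruct (ctx_equiv_extract (LF x Bot) G0 G' eq_refl HS) as (G'' & HG' & _).
    apply S_perm with (LF x Bot :: G'') D0; [apply S_botL|symmetry; exact HG'|reflexivity].
  - apply (realizes_logL _ y k); auto.
  - apply (realizes_logR _ y k); auto.
  - realize_keep [InW x a; All a A] (@nil lform). apply S_LAll. use_prem Hp [LF x A] (@nil lform).
  - realize_keep [InW x a] [Ex a A]. apply S_REx. use_prem Hp (@nil lform) [LF x A].
  - realize_keep [InN a x; LF x (Cond A B)] (@nil lform).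
    apply S_LCond; [use_prem Hp (@nil lform) [Ex a A]|use_prem Hp [Cnd x a A B] (@nil lform)].
  - realize_keep [InN c x; Sub c a] [Cnd x a A B].
    apply S_RBar; [use_prem Hp (@nil lform) [Ex c A]|use_prem Hp (@nil lform) [All c (Imp A B)]].
  - realize_keep (@nil lform) (@nil lform). apply (S_Ref l m a). use_prem Hp [Sub a a] (@nil lform).
  - apply (realizes_Tr a b c); assumption.
  - realize_keep [InW x a; Sub a b] (@nil lform). apply S_LSub. use_prem Hp [InW x b] (@nil lform).
  - realize_keep (@nil lform) (@nil lform). apply (S_N l m n x); [assumption|apply Hfn; auto; incl_tac|].
    use_prem Hp [InN (NV n) x] (@nil lform).
  - realize_keep [InN a x] (@nil lform). apply (S_0 l m y); [assumption| |use_prem Hp [InW y a] (@nil lform)].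
    eapply fresh_w_wlabs; [|apply (Hw y eq_refl)]. incl_tac.
  - realize_keep (@nil lform) (@nil lform). apply (S_T l m n x); [assumption|apply Hfn; auto; incl_tac|].
    use_prem Hp [InW x (NV n); InN (NV n) x] (@nil lform).
  - realize_keep [InN a x] (@nil lform). apply S_W; [assumption|use_prem Hp [InW x a] (@nil lform)].
  - realize_keep [InN (NS x) x] (@nil lform). apply S_Single; [assumption|use_prem Hp [InW x (NS x)] (@nil lform)].
  - realize_keep [InN a x] (@nil lform). apply S_C; [assumption|use_prem Hp [InN (NS x) x; Sub (NS x) a] (@nil lform)].
  - apply (realizes_Repl1 t x y); assumption.
  - realize_keep [InW y (NS x); instAt t y] (@nil lform). apply S_Repl2; [assumption|].
    use_prem Hp [instAt t x] (@nil lform).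
  - realize_keep (@nil lform) (@nil lform). apply (S_U1 l m n a b x y z); [assumption|incl_tac|apply Hfn; auto; incl_tac|].
    use_prem Hp [InW z (NV n); InN (NV n) x] (@nil lform).
  - realize_keep (@nil lform) (@nil lform). apply (S_U2 l m n a b x y z); [assumption|incl_tac|apply Hfn; auto; incl_tac|].
    use_prem Hp [InW z (NV n); InN (NV n) y] (@nil lform).
  - realize_keep (@nil lform) (@nil lform). apply (S_A1 l m a b x y); [assumption|incl_tac|].
    use_prem Hp [InN b y] (@nil lform).
  - apply (realizes_A2 a b x y); assumption.
Qed.

Lemma der_realizes G D : der l m G D -> realizes G D.
Proof.
  induction 1 as [Lc Rc NL NR Ps ew en G0 D0 G D Hr HG HD HNL HNR Hf Hp IH].
  intros G' HS. apply S_perm with G' (Rc ++ D0); [|reflexivity|symmetry; exact HD].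
  apply (realizes_rule Lc Rc NL NR Ps ew en G0 D0 Hr HNL HNR); [|exact IH|].
  - eapply eigen_fresh_incl; [|exact Hf]. apply Permutation_incl, Permutation_app; symmetry; assumption.
  - exact (ctx_equiv_perm _ _ _ _ HG (Permutation_refl _) HS).
Qed.

Theorem seqder_of_der G D : der l m G D -> seqder l m G D.
Proof. intro H. exact (der_realizes G D H G (ctx_equiv_refl G)). Qed.

End Translation.

Theorem mainTheorem13 :
  forall (l : level) (m : modext) (A : form),
    hilbert l m A -> forall x : wlab, seqder l m [] [LF x A].
Proof.
  intros l m A H x. apply seqder_of_der, der_hilbert, H.
Qed.
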